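(* Let $d\ge2$, $\alpha\in(0,1)$, $\epsilon\in(0,1)$. There exist constants $0<C_1\le C_2$ depending only on $d,\epsilon,\alpha$ such that for all sufficiently large $n$ and all $\boldsymbol\mu\in\{0,\dots,n\}^{d\times d}$ with $\mu_{rs}\ge\epsilon n$ for all $r\ne s$, $$C_1\frac{e^{-\vartheta(\boldsymbol\mu)}}{T_{K_d}(\boldsymbol\mu)^{1/2}}\le A(\boldsymbol\mu)\le C_2\frac{e^{-\vartheta(\boldsymbol\mu)}}{T_{K_d}(\boldsymbol\mu)^{1/2}},$$ where $A(\boldsymbol\mu)=\sum_{\boldsymbol\nu}\prod_{r\neq s}\binom{\mu_{rs}}{\nu_{rs}}\alpha^{\nu_{rs}}(1-\alpha)^{\mu_{rs}-\nu_{rs}}$, the sum over integer off-diagonal arrays $(\nu_{rs})_{r\ne s}$ with $0\le\nu_{rs}\le\mu_{rs}$ and $\sum_{s\ne r}\nu_{rs}=\sum_{s\ne r}\nu_{sr}$ for all $r$.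
   Context: $\mathcal F=\{\mathbf x\in\mathbb R^{d\times d}:\sum_s x_{rs}=\sum_s x_{sr}\ \forall r\}$. $D(p\|q)=p\log\frac pq+(1-p)\log\frac{1-p}{1-q}$. $\vartheta(\boldsymbol\mu)=\min\{\sum_{r\ne s}\mu_{rs}D(x_{rs}\|\alpha):\mathbf x\in[0,1]^{d\times d},\ \mathbf x\odot\boldsymbol\mu\in\mathcal F\}$, $\odot$ the entrywise product. $K_d$ is the multigraph on $\{1,\dots,d\}$ with one edge for each ordered pair $(r,s)$, $r\ne s$ (two parallel edges between every pair of distinct vertices); $T_{K_d}(\mathbf z)=\frac1{N(K_d)}\sum_T\prod_{(r,s)\in T}z_{rs}$ over spanning trees $T$ of $K_d$, with $N(K_d)=2^{d-1}d^{d-2}$ their number. *)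

From Stdlib Require Import Reals Lra Lia List Arith Binomial.
From Stdlib Require Import Relations Relation_Operators.
From Stdlib Require Import ClassicalEpsilon ClassicalDescription.
Import ListNotations.
Open Scope R_scope.

(* Indices of a d x d array are 0..d-1. Arrays are functions nat -> nat -> _ ;
   only the entries with r, s < d are ever used. *)

Definition rsum {I : Type} (l : list I) (f : I -> R) : R :=
  fold_right (fun i acc => f i + acc) 0 l.
Definition rprod {I : Type} (l : list I) (f : I -> R) : R :=
  fold_right (fun i acc => f i * acc) 1 l.

Definition indic (P : Prop) : R :=
  if excluded_middle_informative P then 1 else 0.

(* The ordered pairs (r,s), r <> s, r,s < d  (= edges of K_d, off-diagonal
   positions of a d x d array). *)
Definition offdiag (d : nat) : list (nat * nat) :=
  flat_map (fun r => map (fun s => (r, s))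
                         (filter (fun s => negb (Nat.eqb r s)) (seq 0 d)))
           (seq 0 d).

Definition inF (d : nat) (x : nat -> nat -> R) : Prop :=
  forall r, (r < d)%nat ->
    rsum (seq 0 d) (fun s => x r s) = rsum (seq 0 d) (fun s => x s r).

(* Binary relative entropy D(p||q) (Stdlib's ln 0 = 0, so 0 log 0 = 0). *)
Definition KL (p q : R) : R :=
  p * ln (p / q) + (1 - p) * ln ((1 - p) / (1 - q)).

Definition theta_obj (d : nat) (alpha : R) (mu : nat -> nat -> nat)
  (x : nat -> nat -> R) : R :=
  rsum (offdiag d) (fun e => INR (mu (fst e) (snd e)) * KL (x (fst e) (snd e)) alpha).

Definition theta_feasible (d : nat) (mu : nat -> nat -> nat)
  (x : nat -> nat -> R) : Prop :=
  (forall r s, (r < d)%nat -> (s < d)%nat -> 0 <= x r s <= 1) /\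
  inF d (fun r s => x r s * INR (mu r s)).

(* vartheta(mu) = min { theta_obj x : x feasible } (the minimum exists by
   compactness; we pick the minimum value with Hilbert's epsilon). *)
Definition is_theta_min (d : nat) (alpha : R) (mu : nat -> nat -> nat) (t : R) : Prop :=
  exists x, theta_feasible d mu x /\ t = theta_obj d alpha mu x /\
    forall y, theta_feasible d mu y -> theta_obj d alpha mu x <= theta_obj d alpha mu y.

Definition vartheta (d : nat) (alpha : R) (mu : nat -> nat -> nat) : R :=
  epsilon (inhabits 0) (is_theta_min d alpha mu).

Fixpoint powerset {A : Type} (l : list A) : list (list A) :=
  match l with
  | [] => [[]]
  | a :: l' => let p := powerset l' in p ++ map (cons a) p
  end.

Definition adj (E : list (nat * nat)) (a b : nat) : Prop :=
  In (a, b) E \/ In (b, a) E.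

Definition is_spanning_tree (d : nat) (E : list (nat * nat)) : Prop :=
  length E = (d - 1)%nat /\
  forall v, (v < d)%nat -> clos_refl_trans nat (adj E) 0%nat v.

Definition NKd (d : nat) : R :=
  rsum (powerset (offdiag d)) (fun E => indic (is_spanning_tree d E)).

Definition TKd (d : nat) (z : nat -> nat -> R) : R :=
  / NKd d * rsum (powerset (offdiag d))
    (fun E => indic (is_spanning_tree d E) * rprod E (fun e => z (fst e) (snd e))).

(* Enumeration of all off-diagonal arrays nu with 0 <= nu_rs <= mu_rs
   (diagonal entries and entries outside d x d are 0). *)
Definition upd (f : nat -> nat -> nat) (r s k : nat) : nat -> nat -> nat :=
  fun a b => if andb (Nat.eqb a r) (Nat.eqb b s) then k else f a b.

Fixpoint boxes (ps : list (nat * nat)) (mu : nat -> nat -> nat)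
  : list (nat -> nat -> nat) :=
  match ps with
  | [] => [fun _ _ => 0%nat]
  | (r, s) :: ps' =>
      flat_map (fun nu => map (fun k => upd nu r s k) (seq 0 (S (mu r s))))
               (boxes ps' mu)
  end.

Definition balanced (d : nat) (nu : nat -> nat -> nat) : Prop :=
  forall r, (r < d)%nat ->
    rsum (filter (fun s => negb (Nat.eqb s r)) (seq 0 d)) (fun s => INR (nu r s)) =
    rsum (filter (fun s => negb (Nat.eqb s r)) (seq 0 d)) (fun s => INR (nu s r)).

Definition Amu (d : nat) (alpha : R) (mu : nat -> nat -> nat) : R :=
  rsum (boxes (offdiag d) mu)
    (fun nu => indic (balanced d nu) *
       rprod (offdiag d) (fun e =>
         let m := mu (fst e) (snd e) in let k := nu (fst e) (snd e) in
         C m k * alpha ^ k * (1 - alpha) ^ (m - k))).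

From Stdlib Require Import Reals Lra Lia List Arith Permutation Relation_Operators.
From Stdlib Require Import ClassicalEpsilon ClassicalDescription FunctionalExtensionality.
Import ListNotations.
Open Scope R_scope.

(* Write phi(t) = ln (1 - alpha + alpha e^t) and let l minimize the convex function
   Lambda(l) = sum_{r<>s} mu_rs phi(l_r - l_s).  Its first-order conditions say that the tilted
   probabilities y_rs = phi'(l_r - l_s) make (mu_rs y_rs) a circulation; together with the
   duality D(x||alpha) >= x t - phi(t) (equality at x = phi'(t)) this gives
   vartheta(mu) = -Lambda(l).  Exponential tilting of each binomial term, and the fact that
   sum nu_rs (l_r - l_s) = 0 for every balanced nu, give A(mu) = e^{Lambda(l)} P(nu balanced),
   nu_rs ~ Bin(mu_rs, y_rs) independent.  Since Lambda(l) <= Lambda(0) = 0 and mu_rs >= eps n,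
   the differences l_r - l_s are bounded, so the y_rs stay away from 0 and 1.  A balanced nu is
   determined by its entries off the star edges (r,0): the balance probability is the expectation,
   over the other edges, of a product of d-1 binomial point probabilities, each of order
   n^{-1/2} near the mean (local limit bounds), and the other edges stay near their means with
   probability bounded below (Chebyshev).  Hence P(nu balanced) ~ n^{-(d-1)/2} ~ T_{K_d}(mu)^{-1/2},
   since every spanning tree has d-1 edges with weights between eps n and n. *)

Lemma rsum_nil {I} (f : I -> R) : rsum [] f = 0. Proof. reflexivity. Qed.
Lemma rsum_cons {I} (a : I) l f : rsum (a :: l) f = f a + rsum l f. Proof. reflexivity. Qed.
Lemma rsum_app {I} (l1 l2 : list I) f : rsum (l1 ++ l2) f = rsum l1 f + rsum l2 f.
Proof. induction l1; simpl; [ring|]. unfold rsum in *; simpl. rewrite IHl1. ring. Qed.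
Lemma rsum_ext {I} (l : list I) f g : (forall i, In i l -> f i = g i) -> rsum l f = rsum l g.
Proof. induction l; intros H; [reflexivity|]. rewrite !rsum_cons. rewrite H by (left; auto).
 rewrite IHl; auto. intros; apply H; right; auto. Qed.
Lemma rsum_plus {I} (l : list I) f g : rsum l (fun i => f i + g i) = rsum l f + rsum l g.
Proof. induction l; [simpl; unfold rsum; simpl; ring|]. rewrite !rsum_cons, IHl. ring. Qed.
Lemma rsum_minus {I} (l : list I) f g : rsum l (fun i => f i - g i) = rsum l f - rsum l g.
Proof. induction l; [simpl; unfold rsum; simpl; ring|]. rewrite !rsum_cons, IHl. ring. Qed.
Lemma rsum_scal {I} (l : list I) c f : rsum l (fun i => c * f i) = c * rsum l f.
Proof. induction l; [unfold rsum; simpl; ring|]. rewrite !rsum_cons, IHl. ring. Qed.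
Lemma rsum_scalr {I} (l : list I) c f : rsum l (fun i => f i * c) = rsum l f * c.
Proof. induction l; [unfold rsum; simpl; ring|]. rewrite !rsum_cons, IHl. ring. Qed.
Lemma rsum_zero {I} (l : list I) : rsum l (fun _ => 0) = 0.
Proof. induction l; [reflexivity|]. rewrite rsum_cons, IHl; ring. Qed.
Lemma rsum_le {I} (l : list I) f g : (forall i, In i l -> f i <= g i) -> rsum l f <= rsum l g.
Proof. induction l; intros H; [unfold rsum; simpl; lra|]. rewrite !rsum_cons.
 assert (f a <= g a) by (apply H; left; auto). assert (rsum l f <= rsum l g) by (apply IHl; intros; apply H;
   right; auto). lra. Qed.
Lemma rsum_nonneg {I} (l : list I) f : (forall i, In i l -> 0 <= f i) -> 0 <= rsum l f.
Proof. intros H. rewrite <- (rsum_zero l). apply rsum_le; auto. Qed.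
Lemma rsum_const {I} (l : list I) c : rsum l (fun _ => c) = INR (length l) * c.
Proof. induction l; [unfold rsum; simpl; ring|]. rewrite rsum_cons, IHl. simpl length. rewrite S_INR. ring.
  Qed.
Lemma rsum_map {I J} (g : I -> J) l f : rsum (map g l) f = rsum l (fun i => f (g i)).
Proof. induction l; [reflexivity|]. simpl map. rewrite !rsum_cons, IHl. reflexivity. Qed.
Lemma rsum_flat_map {I J} (g : I -> list J) l f : rsum (flat_map g l) f = rsum l (fun i => rsum (g i) f).
Proof. induction l; [reflexivity|]. simpl flat_map. rewrite rsum_app, rsum_cons, IHl. reflexivity. Qed.
Lemma rsum_filter {I} (p : I -> bool) l f : rsum (filter p l) f = rsum l (fun i => if p i then f i else 0).
Proof. induction l; [reflexivity|]. simpl filter.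
  destruct (p a) eqn:E; rewrite ?rsum_cons, IHl; rewrite ?E; ring. Qed.
Lemma rsum_swap {I J} (l1 : list I) (l2 : list J) f :
  rsum l1 (fun i => rsum l2 (fun j => f i j)) = rsum l2 (fun j => rsum l1 (fun i => f i j)).
Proof. induction l1.
 - rewrite rsum_nil. symmetry. apply rsum_zero.
 - rewrite rsum_cons, IHl1, <- rsum_plus. reflexivity. Qed.
Lemma rsum_abs {I} (l : list I) f : Rabs (rsum l f) <= rsum l (fun i => Rabs (f i)).
Proof. induction l; [unfold rsum; simpl; rewrite Rabs_R0; lra|]. rewrite !rsum_cons.
 eapply Rle_trans; [apply Rabs_triang|]. lra. Qed.
Lemma rsum_ge_term {I} (l : list I) f a : In a l -> (forall i, In i l -> 0 <= f i) -> f a <= rsum l f.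
Proof. induction l; intros Ha H; [destruct Ha|]. rewrite rsum_cons. destruct Ha as [<-|Ha].
 - assert (0 <= rsum l f) by (apply rsum_nonneg; intros; apply H; right; auto). lra.
 - assert (0 <= f a0) by (apply H; left; auto).
   assert (f a <= rsum l f) by (apply IHl; auto; intros; apply H; right; auto). lra. Qed.
Lemma rsum_abs_le {I} (l : list I) f c : (forall i, In i l -> Rabs (f i) <= c) ->
  Rabs (rsum l f) <= INR (length l) * c.
Proof. intros H. eapply Rle_trans; [apply rsum_abs|]. rewrite <- rsum_const. apply rsum_le; auto. Qed.
Lemma rsum_INR (l : list nat) (f : nat -> nat) : rsum l (fun i => INR (f i)) =
  INR (fold_right (fun i acc => (f i + acc)%nat) 0%nat l).
Proof. induction l; [reflexivity|]. rewrite rsum_cons, IHl. simpl. rewrite plus_INR. reflexivity. Qed.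

Lemma rprod_cons {I} (a : I) l f : rprod (a :: l) f = f a * rprod l f. Proof. reflexivity. Qed.
Lemma rprod_app {I} (l1 l2 : list I) f : rprod (l1 ++ l2) f = rprod l1 f * rprod l2 f.
Proof. induction l1; simpl; [unfold rprod; simpl; ring|]. unfold rprod in *; simpl. rewrite IHl1. ring. Qed.
Lemma rprod_ext {I} (l : list I) f g : (forall i, In i l -> f i = g i) -> rprod l f = rprod l g.
Proof. induction l; intros H; [reflexivity|]. rewrite !rprod_cons. rewrite H by (left; auto).
 rewrite IHl; auto. intros; apply H; right; auto. Qed.
Lemma rprod_nonneg {I} (l : list I) f : (forall i, In i l -> 0 <= f i) -> 0 <= rprod l f.
Proof. induction l; intros H; [unfold rprod; simpl; lra|]. rewrite rprod_cons.
 apply Rmult_le_pos; [apply H; left; auto| apply IHl; intros; apply H; right; auto]. Qed.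
Lemma rprod_le {I} (l : list I) f g : (forall i, In i l -> 0 <= f i <= g i) -> rprod l f <= rprod l g.
Proof. induction l; intros H; [unfold rprod; simpl; lra|]. rewrite !rprod_cons.
 assert (0 <= f a <= g a) by (apply H; left; auto).
 assert (0 <= rprod l f) by (apply rprod_nonneg; intros; apply H; right; auto).
 assert (rprod l f <= rprod l g) by (apply IHl; intros; apply H; right; auto).
 apply Rmult_le_compat; lra. Qed.
Lemma rprod_const {I} (l : list I) c : rprod l (fun _ => c) = c ^ length l.
Proof. induction l; [reflexivity|]. rewrite rprod_cons, IHl. reflexivity. Qed.
Lemma rprod_mult {I} (l : list I) f g : rprod l (fun i => f i * g i) = rprod l f * rprod l g.
Proof. induction l; [unfold rprod; simpl; ring|]. rewrite !rprod_cons, IHl. ring. Qed.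

Lemma indic_true (P : Prop) : P -> indic P = 1.
Proof. intros H; unfold indic; destruct (excluded_middle_informative P); tauto. Qed.
Lemma indic_false (P : Prop) : ~ P -> indic P = 0.
Proof. intros H; unfold indic; destruct (excluded_middle_informative P); tauto. Qed.
Lemma indic_01 (P : Prop) : 0 <= indic P <= 1.
Proof. unfold indic; destruct (excluded_middle_informative P); lra. Qed.
Lemma indic_iff (P Q : Prop) : (P <-> Q) -> indic P = indic Q.
Proof. intros H; unfold indic; destruct (excluded_middle_informative P), (excluded_middle_informative Q);
  tauto. Qed.
Lemma indic_forall_rprod {I} (l : list I) (P : I -> Prop) : indic (forall i, In i l ->
  P i) = rprod l (fun i => indic (P i)).
Proof. induction l.
 - apply indic_true. intros i [].
 - rewrite rprod_cons, <- IHl. destruct (classic (P a)) as [Ha|Ha].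
   + rewrite (indic_true (P a)) by auto. rewrite Rmult_1_l. apply indic_iff.
     split; intros H i Hi; [apply H; right; auto|].
     destruct Hi as [<-|]; auto.
   + rewrite (indic_false (P a)) by auto. rewrite Rmult_0_l. apply indic_false.
     intros H; apply Ha, H; left; auto. Qed.

Definition box_range (mu : nat -> nat -> nat) (e : nat * nat) := seq 0 (S (mu (fst e) (snd e))).
Arguments box_range : simpl never.

(* [box_sum mu ps g nu] sums [g] over all arrays that agree with [nu] off the positions [ps] and
   take every value in [0..mu_e] at each position [e] of [ps]. *)
Fixpoint box_sum (mu : nat -> nat -> nat) (ps : list (nat * nat)) (g : (nat -> nat -> nat) -> R)
  (nu : nat -> nat -> nat) : R :=
  match ps with
  | [] => g nu
  | e :: ps' => box_sum mu ps' (fun w => rsum (box_range mu e) (fun k => g (upd w (fst e) (snd e) k))) nu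
  end.

Lemma rsum_boxes mu ps f : rsum (boxes ps mu) f = box_sum mu ps f (fun _ _ => 0%nat).
Proof. revert f. induction ps as [|[r s] ps IH]; intros f.
 - simpl. unfold rsum; simpl. ring.
 - cbn [boxes]. rewrite rsum_flat_map. cbn [box_sum]. rewrite <- IH. apply rsum_ext. intros nu _.
   cbv beta. rewrite rsum_map. reflexivity. Qed.

Lemma box_sum_ext mu ps g g' nu : (forall w, g w = g' w) -> box_sum mu ps g nu = box_sum mu ps g' nu.
Proof. intros H. replace g' with g; [reflexivity|]. apply functional_extensionality; auto. Qed.

Lemma box_sum_le mu ps g g' nu : (forall w, g w <= g' w) -> box_sum mu ps g nu <= box_sum mu ps g' nu.
Proof. revert g g' nu. induction ps as [|e ps IH]; intros g g' nu H; cbn [box_sum]; auto.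
 apply IH. intros w. apply rsum_le. intros; apply H. Qed.

Lemma box_sum_scal mu ps c g nu : box_sum mu ps (fun w => c * g w) nu = c * box_sum mu ps g nu.
Proof. revert g nu. induction ps as [|e ps IH]; intros g nu; cbn [box_sum]; auto.
 rewrite <- IH. apply box_sum_ext. intros w. apply rsum_scal. Qed.

Lemma box_sum_app mu l1 l2 g nu : box_sum mu (l1 ++ l2) g nu = box_sum mu l2 (fun w => box_sum mu l1 g w) nu.
Proof. revert g. induction l1 as [|e l1 IH]; intros g; cbn [box_sum app]; auto. Qed.

Lemma upd_comm (w : nat -> nat -> nat) a b c d j k : (a, b) <> (c, d) ->
  upd (upd w a b j) c d k = upd (upd w c d k) a b j.
Proof. intros H. apply functional_extensionality; intros x; apply functional_extensionality; intros y.
 unfold upd. destruct (Nat.eqb_spec x a), (Nat.eqb_spec y b), (Nat.eqb_spec x c), (Nat.eqb_spec y d); simpl;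
   subst; auto.
 exfalso; auto. Qed.

Lemma box_sum_perm mu ps ps' g nu : NoDup ps -> Permutation ps ps' ->
  box_sum mu ps g nu = box_sum mu ps' g nu.
Proof. intros Hn Hp. revert g nu. induction Hp; intros g nu.
 - reflexivity.
 - cbn [box_sum]. apply IHHp. inversion Hn; auto.
 - cbn [box_sum]. apply box_sum_ext. intros w. rewrite rsum_swap. apply rsum_ext; intros k _.
   apply rsum_ext; intros j _.
   destruct x as [a b], y as [c d]; simpl. rewrite upd_comm; auto. inversion Hn; subst.
   intros E. apply H1. rewrite E. left; auto.
 - rewrite IHHp1 by auto. apply IHHp2. eapply Permutation_NoDup; eauto. Qed.

Lemma upd_same (w : nat -> nat -> nat) a b k : upd w a b k a b = k.
Proof. unfold upd. rewrite !Nat.eqb_refl. reflexivity. Qed.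
Lemma upd_other (w : nat -> nat -> nat) a b k x y : (x, y) <> (a, b) -> upd w a b k x y = w x y.
Proof. intros H. unfold upd. destruct (Nat.eqb_spec x a), (Nat.eqb_spec y b); subst; simpl; auto.
  exfalso; auto. Qed.

Lemma box_sum_rprod mu ps (G : (nat -> nat -> nat) -> R) (h : (nat -> nat -> nat) -> nat * nat -> nat ->
  R) nu :
  NoDup ps ->
  (forall a, In a ps -> forall w k, G (upd w (fst a) (snd a) k) = G w) ->
  (forall a, In a ps -> forall w k, h (upd w (fst a) (snd a) k) = h w) ->
  box_sum mu ps (fun w => G w * rprod ps (fun e => h w e (w (fst e) (snd e)))) nu =
  G nu * rprod ps (fun e => rsum (box_range mu e) (h nu e)).
Proof. revert G nu. induction ps as [|a ps IH]; intros G nu Hn HG Hh.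
 - simpl. reflexivity.
 - cbn [box_sum]. inversion Hn; subst.
   rewrite (box_sum_ext _ _ _ (fun w => (rsum (box_range mu a) (h w a) * G w) * rprod ps
     (fun e => h w e (w (fst e) (snd e))))).
   + rewrite IH; auto.
     * rewrite rprod_cons. ring.
     * intros b Hb w k. rewrite HG by (right; auto). rewrite Hh by (right; auto). reflexivity.
     * intros b Hb w k. apply Hh; right; auto.
   + intros w. rewrite <- rsum_scalr. rewrite <- rsum_scalr. apply rsum_ext. intros k _.
     rewrite rprod_cons. rewrite HG by (left; auto). rewrite Hh by (left; auto). rewrite upd_same.
     rewrite (rprod_ext ps _ (fun e => h w e (w (fst e) (snd e)))). ring.
     intros e He. rewrite upd_other; auto. intros E. apply H1.
     destruct e, a; simpl in E; inversion E; subst; auto. Qed.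

Definition others (d r : nat) := filter (fun s => negb (Nat.eqb s r)) (seq 0 d).

Lemma offdiag_In d r s : In (r, s) (offdiag d) <-> (r < d /\ s < d /\ r <> s)%nat.
Proof. unfold offdiag. rewrite in_flat_map. split.
 - intros [x [Hx Hy]]. rewrite in_map_iff in Hy. destruct Hy as [y [Hy Hy2]]. inversion Hy; subst.
   rewrite filter_In in Hy2. destruct Hy2 as [H1 H2]. rewrite in_seq in Hx, H1.
   apply Bool.negb_true_iff, Nat.eqb_neq in H2. lia.
 - intros (H1 & H2 & H3). exists r. split; [rewrite in_seq; lia|]. rewrite in_map_iff. exists s. split; auto.
   rewrite filter_In. split; [rewrite in_seq; lia|]. apply Bool.negb_true_iff, Nat.eqb_neq; auto. Qed.

Lemma others_In d r s : In s (others d r) <-> (s < d /\ s <> r)%nat.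
Proof. unfold others. rewrite filter_In, in_seq. rewrite Bool.negb_true_iff, Nat.eqb_neq. lia. Qed.

Lemma flat_pairs_NoDup (m l : list nat) : NoDup m -> NoDup l ->
  NoDup (flat_map (fun r => map (fun s => (r, s)) (filter (fun s => negb (Nat.eqb r s)) m)) l).
Proof. intros Hm Hl. induction l as [|a l IH]; simpl.
 - constructor.
 - inversion Hl; subst. apply NoDup_app; auto.
   + apply FinFun.Injective_map_NoDup. intros x y E; inversion E; auto. apply NoDup_filter; auto.
   + intros [x y] G1 G2. rewrite in_map_iff in G1. destruct G1 as [z [E _]]. inversion E; subst.
     rewrite in_flat_map in G2. destruct G2 as [b [Hb Hb2]]. rewrite in_map_iff in Hb2.
       destruct Hb2 as [c [E2 _]].
     inversion E2; subst. auto. Qed.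
Lemma offdiag_NoDup d : NoDup (offdiag d).
Proof. apply flat_pairs_NoDup; apply seq_NoDup. Qed.

Lemma rsum_offdiag_rows d (g : nat -> nat -> R) :
  rsum (offdiag d) (fun e => g (fst e) (snd e)) =
    rsum (seq 0 d) (fun r => rsum (others d r) (fun s => g r s)).
Proof. unfold offdiag. rewrite rsum_flat_map. apply rsum_ext. intros r _. rewrite rsum_map. simpl.
 unfold others. rewrite !rsum_filter. apply rsum_ext. intros s _. rewrite Nat.eqb_sym. reflexivity. Qed.

Lemma rsum_offdiag_cols d (g : nat -> nat -> R) :
  rsum (offdiag d) (fun e => g (fst e) (snd e)) =
    rsum (seq 0 d) (fun s => rsum (others d s) (fun r => g r s)).
Proof. rewrite rsum_offdiag_rows. unfold others.
  rewrite (rsum_ext (seq 0 d) _ (fun r => rsum (seq 0 d) (fun s => if negb (s =? r)%nat then g r s else 0))).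
 2:{ intros; apply rsum_filter. } rewrite rsum_swap. apply rsum_ext. intros s _. rewrite rsum_filter.
 apply rsum_ext. intros r _. rewrite Nat.eqb_sym. reflexivity. Qed.

Lemma rsum_seq_split d r (g : nat -> R) : (r < d)%nat -> rsum (seq 0 d) g = g r + rsum (others d r) g.
Proof. intros Hr. unfold others. rewrite rsum_filter.
 assert (H : rsum (seq 0 d) (fun s => if (s =? r)%nat then g s else 0) = g r).
 { induction d. lia. rewrite seq_S, rsum_app. simpl plus. destruct (Nat.eq_dec r d).
   - subst. rewrite (rsum_ext _ _ (fun _ => 0)). rewrite rsum_zero.
     rewrite rsum_cons, Nat.eqb_refl, rsum_nil. ring.
     intros i Hi. rewrite in_seq in Hi. destruct (Nat.eqb_spec i d); [lia|auto].
   - rewrite IHd by lia. rewrite rsum_cons, rsum_nil. destruct (Nat.eqb_spec d r); [lia|]. ring. }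
 rewrite <- H at 1. rewrite <- rsum_plus. apply rsum_ext. intros s _. destruct (s =? r)%nat; simpl; ring. Qed.

Lemma inF_others d x : inF d x <-> forall r, (r < d)%nat ->
  rsum (others d r) (fun s => x r s) = rsum (others d r) (fun s => x s r).
Proof. unfold inF. split; intros H r Hr; specialize (H r Hr).
 - rewrite (rsum_seq_split d r) in H by auto. rewrite (rsum_seq_split d r (fun s => x s r)) in H by auto. lra.
 - rewrite (rsum_seq_split d r) by auto. rewrite (rsum_seq_split d r (fun s => x s r)) by auto. lra. Qed.

Lemma rsum_circulation_gradient d (f : nat -> nat -> R) (l : nat -> R) :
  (forall r, (r < d)%nat -> rsum (others d r) (fun s => f r s) = rsum (others d r) (fun s => f s r)) ->
  rsum (offdiag d) (fun e => f (fst e) (snd e) * (l (fst e) - l (snd e))) = 0.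
Proof. intros H. rewrite (rsum_ext _ _ (fun e => f (fst e) (snd e) * l (fst e) - f (fst e) (snd e) *
  l (snd e))) by (intros; ring).
 rewrite rsum_minus. rewrite (rsum_offdiag_rows d (fun r s => f r s * l r)).
   rewrite (rsum_offdiag_cols d (fun r s => f r s * l s)).
 rewrite <- rsum_minus. rewrite (rsum_ext _ _ (fun _ => 0)). apply rsum_zero. intros r Hr.
   rewrite in_seq in Hr.
 rewrite rsum_scalr, rsum_scalr. rewrite H by lia. ring. Qed.

Lemma perm_filter_split {A} (p : A -> bool) l : Permutation l (filter p l ++ filter (fun a => negb (p a)) l).
Proof. induction l; simpl; auto. destruct (p a); simpl.
 - constructor; auto.
 - eapply Permutation_trans; [|apply Permutation_middle]. constructor; auto. Qed.

Lemma rprod_perm {I} (l l' : list I) f : Permutation l l' -> rprod l f = rprod l' f.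
Proof. intros H; induction H; rewrite ?rprod_cons; try congruence; ring. Qed.

(* The star edges [(r,0)], [r >= 1]: in a balanced array their entries are determined by the
   entries on the other edges. *)
Definition star_edges d := filter (fun e : nat * nat => Nat.eqb (snd e) 0) (offdiag d).
Definition nonstar_edges d := filter (fun e : nat * nat => negb (Nat.eqb (snd e) 0)) (offdiag d).

Lemma star_edges_In d e : In e (star_edges d) <-> (1 <= fst e < d /\ snd e = 0)%nat.
Proof. destruct e as [r s]. unfold star_edges. rewrite filter_In, offdiag_In. simpl. rewrite Nat.eqb_eq. lia.
  Qed.
Lemma nonstar_edges_In d e : In e (nonstar_edges d) <-> In e (offdiag d) /\ snd e <> 0%nat.
Proof. unfold nonstar_edges. rewrite filter_In, Bool.negb_true_iff, Nat.eqb_neq. tauto. Qed.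
Lemma star_edges_offdiag d e : In e (star_edges d) -> In e (offdiag d).
Proof. unfold star_edges. rewrite filter_In. tauto. Qed.
Lemma star_edges_NoDup d : NoDup (star_edges d). Proof. apply NoDup_filter, offdiag_NoDup. Qed.
Lemma nonstar_edges_NoDup d : NoDup (nonstar_edges d). Proof. apply NoDup_filter, offdiag_NoDup. Qed.
Lemma offdiag_perm_star d : Permutation (offdiag d) (star_edges d ++ nonstar_edges d).
Proof. apply perm_filter_split. Qed.

Lemma rsum_delta (l : list nat) a (g : nat -> R) : NoDup l -> In a l ->
  rsum l (fun s => if Nat.eqb s a then g s else 0) = g a.
Proof. induction l as [|b l IH]; intros Hn Ha; [destruct Ha|]. inversion Hn; subst. rewrite rsum_cons.
 destruct Ha as [<-|Ha].
 - rewrite Nat.eqb_refl. rewrite (rsum_ext _ _ (fun _ => 0)). rewrite rsum_zero; ring.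
   intros i Hi. destruct (Nat.eqb_spec i b); subst; tauto.
 - destruct (Nat.eqb_spec b a); subst; [tauto|]. rewrite IH; auto. ring. Qed.

Lemma others_NoDup d r : NoDup (others d r). Proof. apply NoDup_filter, seq_NoDup. Qed.

(* The value forced on the star edge [(r,0)] by balance at [r] ([0] for [r = 0]). *)
Definition star_flow d (w : nat -> nat -> nat) r :=
  if Nat.eqb r 0 then 0 else
  rsum (others d r) (fun s => INR (w s r)) - rsum (others d r)
    (fun s => if Nat.eqb s 0 then 0 else INR (w r s)).

Lemma rsum_others_split0 d r (g : nat -> R) : (1 <= r < d)%nat ->
  rsum (others d r) g = g 0%nat + rsum (others d r) (fun s => if Nat.eqb s 0 then 0 else g s).
Proof. intros Hr. rewrite <- (rsum_delta (others d r) 0 g).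
 - rewrite <- rsum_plus. apply rsum_ext. intros s _. destruct (Nat.eqb s 0); ring.
 - apply others_NoDup.
 - apply others_In. lia. Qed.

Lemma rsum_net_flow d (w : nat -> nat -> nat) :
  rsum (seq 0 d) (fun r => rsum (others d r) (fun s => INR (w r s)) - rsum (others d r)
    (fun s => INR (w s r))) = 0.
Proof. rewrite rsum_minus. rewrite <- (rsum_offdiag_rows d (fun r s => INR (w r s))).
  rewrite <- (rsum_offdiag_cols d (fun r s => INR (w r s))). ring. Qed.

Lemma balanced_iff_star d w : (1 <= d)%nat -> (balanced d w <-> forall e, In e (star_edges d) ->
  INR (w (fst e) (snd e)) = star_flow d w (fst e)).
Proof. intros Hd.
 change (balanced d w) with (forall r, (r < d)%nat ->
   rsum (others d r) (fun s => INR (w r s)) = rsum (others d r) (fun s => INR (w s r))). split.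
 - intros H [r s] He. apply star_edges_In in He. simpl in *. destruct He as [Hr ->]. unfold star_flow.
   destruct (Nat.eqb_spec r 0); [lia|]. specialize (H r ltac:(lia)).
     rewrite (rsum_others_split0 d r (fun s => INR (w r s))) in H by lia. lra.
 - intros H. assert (Hr1 : forall r, (1 <= r < d)%nat ->
   rsum (others d r) (fun s => INR (w r s)) = rsum (others d r) (fun s => INR (w s r))).
   { intros r Hr. specialize (H (r, 0%nat) ltac:(apply star_edges_In; simpl; lia)). simpl in H.
     unfold star_flow in H.
     destruct (Nat.eqb_spec r 0); [lia|]. rewrite (rsum_others_split0 d r (fun s => INR (w r s))) by lia.
       lra. }
   intros r Hr. destruct (Nat.eq_dec r 0) as [->|]; [|apply Hr1; lia].
   pose proof (rsum_net_flow d w) as T. replace d with (S (d - 1)) in T at 1 by lia. rewrite <- cons_seq in T.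
   rewrite rsum_cons in T. rewrite (rsum_ext (seq 1 (d-1)) _ (fun _ => 0)) in T. rewrite rsum_zero in T.
     cbv beta in T. lra.
   intros i Hi. rewrite in_seq in Hi. rewrite Hr1 by lia. ring. Qed.

Lemma star_flow_upd d w a k : In a (star_edges d) -> star_flow d (upd w (fst a) (snd a) k) = star_flow d w.
Proof. intros Ha. apply star_edges_In in Ha. destruct a as [r' s']; simpl in *. destruct Ha as [Hr ->].
 apply functional_extensionality. intros r. unfold star_flow. destruct (Nat.eqb_spec r 0); auto. f_equal.
 - apply rsum_ext. intros s _. rewrite upd_other; auto. intros E; inversion E; lia.
 - apply rsum_ext. intros s _. destruct (Nat.eqb_spec s 0); auto. rewrite upd_other; auto.
   intros E; inversion E; lia. Qed.

Theorem rsum_balanced_star d mu (p : nat * nat -> nat -> R) : (1 <= d)%nat ->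
  rsum (boxes (offdiag d) mu) (fun w => indic (balanced d w) * rprod (offdiag d)
    (fun e => p e (w (fst e) (snd e)))) =
  box_sum mu (nonstar_edges d) (fun w => rprod (nonstar_edges d) (fun e => p e (w (fst e) (snd e))) *
     rprod (star_edges d) (fun e => rsum (box_range mu e) (fun k => indic (INR k =
       star_flow d w (fst e)) * p e k))) (fun _ _ => 0%nat).
Proof. intros Hd. rewrite rsum_boxes. rewrite (box_sum_perm _ _ _ _ _ (offdiag_NoDup d)
  (offdiag_perm_star d)). rewrite box_sum_app.
 apply box_sum_ext. intros w.
 rewrite (box_sum_ext _ _ _ (fun w' => rprod (nonstar_edges d) (fun e => p e (w' (fst e) (snd e))) *
    rprod (star_edges d) (fun e => (fun w'' e k => indic (INR k =
      star_flow d w'' (fst e)) * p e k) w' e (w' (fst e) (snd e))))).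
 - rewrite (box_sum_rprod mu (star_edges d) (fun w' => rprod (nonstar_edges d)
   (fun e => p e (w' (fst e) (snd e))))
      (fun w'' e k => indic (INR k = star_flow d w'' (fst e)) * p e k)). reflexivity.
   + apply star_edges_NoDup.
   + intros a Ha w' k. apply rprod_ext. intros e He. rewrite upd_other; auto. intros E.
     apply nonstar_edges_In in He. apply star_edges_In in Ha. destruct He as [_ He].
       destruct a, e; simpl in *; inversion E; subst; lia.
   + intros a Ha w' k. rewrite star_flow_upd; auto.
 - intros w'. rewrite (rprod_perm _ _ _ (offdiag_perm_star d)), rprod_app. cbv beta. rewrite rprod_mult.
   rewrite (indic_iff _ _ (balanced_iff_star d w' Hd)). rewrite indic_forall_rprod. ring. Qed.

(** * Binomial distribution *)

(* For [k > m] Stdlib's [C m k] is a positive junk value, so [binom_pmf m p k] is only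
   meaningful for [k <= m]. *)
Definition binom_pmf (m : nat) (p : R) (k : nat) : R := C m k * p ^ k * (1 - p) ^ (m - k).

Lemma rsum_seq_sum n f : rsum (seq 0 (S n)) f = sum_f_R0 f n.
Proof. induction n. - simpl. unfold rsum; simpl. ring.
 - rewrite seq_S, rsum_app, IHn, rsum_cons, rsum_nil. simpl (0 + S n)%nat. rewrite tech5. ring. Qed.

Lemma rsum_seq_shift a n f : rsum (seq (S a) n) f = rsum (seq a n) (fun i => f (S i)).
Proof. rewrite <- seq_shift, rsum_map. reflexivity. Qed.

Lemma C_pos n k : 0 < C n k.
Proof. unfold C. apply Rdiv_lt_0_compat. apply INR_fact_lt_0. apply Rmult_lt_0_compat; apply INR_fact_lt_0.
  Qed.

Lemma binom_pmf_nonneg m p k : 0 <= p <= 1 -> 0 <= binom_pmf m p k.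
Proof. intros Hp. unfold binom_pmf. apply Rmult_le_pos; [apply Rmult_le_pos|]; try (apply pow_le; lra).
 apply Rlt_le, C_pos. Qed.

Lemma binom_pmf_pos m p k : 0 < p < 1 -> 0 < binom_pmf m p k.
Proof. intros Hp. unfold binom_pmf. apply Rmult_lt_0_compat; [apply Rmult_lt_0_compat|]; try (apply pow_lt;
  lra). apply C_pos. Qed.

Lemma binom_pmf_sum m p : rsum (seq 0 (S m)) (binom_pmf m p) = 1.
Proof. rewrite rsum_seq_sum. unfold binom_pmf. rewrite <- binomial. replace (p + (1 - p)) with 1 by ring.
  apply pow1. Qed.

Lemma C_shift m i : (i <= m)%nat -> C (S m) (S i) * INR (S i) = INR (S m) * C m i.
Proof. intros H. unfold C. replace (S m - S i)%nat with (m - i)%nat by lia. rewrite !fact_simpl.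
  rewrite !mult_INR.
 field. split; [apply INR_fact_neq_0|]. split; [apply INR_fact_neq_0|]. apply not_0_INR; lia. Qed.

Lemma binom_pmf_shift m p (g : nat -> R) :
  rsum (seq 0 (S (S m))) (fun k => binom_pmf (S m) p k * INR k * g k) =
    INR (S m) * p * rsum (seq 0 (S m)) (fun i => binom_pmf m p i * g (S i)).
Proof. rewrite <- cons_seq, rsum_cons, rsum_seq_shift. simpl INR at 1.
  rewrite Rmult_0_r, Rmult_0_l, Rplus_0_l.
 rewrite <- rsum_scal. apply rsum_ext. intros i Hi. rewrite in_seq in Hi. unfold binom_pmf.
 replace (S m - S i)%nat with (m - i)%nat by lia.
   replace (C (S m) (S i) * p ^ S i * (1 - p) ^ (m - i) * INR (S i) * g (S i)) with ((C (S m) (S i) *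
   INR (S i)) * p ^ S i * (1 - p) ^ (m - i) * g (S i)) by ring.
 rewrite C_shift by lia. simpl pow. ring. Qed.

Lemma binom_mean m p : rsum (seq 0 (S m)) (fun k => binom_pmf m p k * INR k) = INR m * p.
Proof. destruct m. - unfold rsum; simpl. ring.
 - rewrite (rsum_ext _ _ (fun k => binom_pmf (S m) p k * INR k * 1)) by (intros; ring).
   rewrite binom_pmf_shift.
   rewrite (rsum_ext _ _ (binom_pmf m p)) by (intros; ring). rewrite binom_pmf_sum. ring. Qed.

Lemma binom_factorial_moment2 m p : rsum (seq 0 (S m)) (fun k => binom_pmf m p k * INR k * (INR k - 1)) =
  INR m * (INR m - 1) * p ^ 2.
Proof. destruct m. - unfold rsum; simpl. ring.
 - rewrite binom_pmf_shift. rewrite (rsum_ext _ _ (fun i => binom_pmf m p i * INR i)). rewrite binom_mean.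
   rewrite S_INR. ring.
   intros i _. rewrite S_INR. ring. Qed.

Lemma binom_variance m p : rsum (seq 0 (S m)) (fun k => binom_pmf m p k * (INR k - INR m * p) ^ 2) =
  INR m * p * (1 - p).
Proof. rewrite (rsum_ext _ _ (fun k => binom_pmf m p k * INR k * (INR k - 1) + (1 - 2 * INR m * p) *
  (binom_pmf m p k * INR k) + (INR m * p)^2 * binom_pmf m p k)) by (intros; ring).
 rewrite !rsum_plus, !rsum_scal, binom_factorial_moment2, binom_mean, binom_pmf_sum. ring. Qed.

Lemma binom_pmf_succ m p k : (k < m)%nat -> binom_pmf m p (S k) * (INR (S k) * (1 - p)) =
  binom_pmf m p k * (INR (m - k) * p).
Proof. intros H. unfold binom_pmf. rewrite pascal_step3 by auto.
  replace (m - k)%nat with (S (m - S k)) by lia.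
 simpl pow. field. apply not_0_INR; lia. Qed.

Lemma binom_chebyshev m p t : 0 <= p <= 1 -> 0 < t ->
  rsum (seq 0 (S m)) (fun k => binom_pmf m p k * indic (t < Rabs (INR k - INR m * p))) <=
    INR m * p * (1 - p) / t ^ 2.
Proof. intros Hp Ht. rewrite <- binom_variance. unfold Rdiv. rewrite <- rsum_scalr. apply rsum_le. intros k _.
 pose proof (binom_pmf_nonneg m p k Hp). unfold indic. destruct (excluded_middle_informative _) as [H1|H1].
 - rewrite Rmult_1_r. rewrite Rmult_assoc. rewrite <- (Rmult_1_r (binom_pmf m p k)) at 1.
   apply Rmult_le_compat_l; auto.
   assert (t ^ 2 < (INR k - INR m * p) ^ 2). { rewrite <- (pow2_abs (INR k - _)).
     pose proof (Rabs_pos (INR k - INR m * p)). simpl. nra. }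
   assert (0 < t ^ 2) by (apply pow_lt; lra). apply (Rmult_le_reg_r (t ^ 2)); auto.
     rewrite Rmult_assoc, Rinv_l by lra. lra.
 - rewrite Rmult_0_r. apply Rmult_le_pos; [apply Rmult_le_pos; auto; apply pow2_ge_0|].
   apply Rlt_le, Rinv_0_lt_compat, pow_lt; lra. Qed.

(** * Local limit bounds for the binomial distribution *)

Lemma exp_le_exp x y : x <= y -> exp x <= exp y.
Proof. intros H. destruct (Rle_lt_or_eq_dec _ _ H). apply Rlt_le, exp_increasing; auto. subst; lra. Qed.

Lemma exp_pow_n a n : exp a ^ n = exp (INR n * a).
Proof. induction n. simpl. rewrite Rmult_0_l, exp_0. reflexivity. simpl pow. rewrite IHn, <- exp_plus, S_INR.
  f_equal; ring. Qed.

Lemma exp_le_1_sub x : 0 <= x <= 1/2 -> exp (-2 * x) <= 1 - x.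
Proof. intros Hx. pose proof (exp_ineq1_le (2 * x)). replace (-2 * x) with (- (2 * x)) by ring.
  rewrite exp_Ropp.
 assert (0 < exp (2 * x)) by apply exp_pos. apply (Rmult_le_reg_l (exp (2 * x))); auto.
   rewrite Rinv_r by lra. nra. Qed.

Lemma exp_le_pow_1_sub x n : 0 <= x <= 1/2 -> exp (-2 * x * INR n) <= (1 - x) ^ n.
Proof. intros Hx. replace (-2 * x * INR n) with (INR n * (-2 * x)) by ring. rewrite <- exp_pow_n.
 apply pow_incr. split. apply Rlt_le, exp_pos. apply exp_le_1_sub; auto. Qed.

Lemma ratio_chain (f : nat -> R) c (P : nat -> Prop) : 0 <= c ->
  (forall k, P k -> c * f k <= f (S k) /\ c * f (S k) <= f k) ->
  forall n k1, (forall j, (k1 <= j < k1 + n)%nat -> P j) ->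
    c ^ n * f k1 <= f (k1 + n)%nat /\ c ^ n * f (k1 + n)%nat <= f k1.
Proof. intros Hc H n. induction n; intros k1 Hj.
 - rewrite Nat.add_0_r. simpl. lra.
 - destruct (IHn k1) as [H1 H2]. intros j Hj2; apply Hj; lia.
   destruct (H (k1 + n)%nat) as [H3 H4]. apply Hj; lia. replace (k1 + S n)%nat with (S (k1 + n)) by lia.
   simpl pow. assert (0 <= c ^ n) by (apply pow_le; auto). split; nra. Qed.

Lemma count_in_window N x L : rsum (seq 0 N) (fun k => indic (x <= INR k <= x + L)) <= Rmax 0 (L + 1).
Proof. revert x L. induction N; intros x L.
 - unfold rsum; simpl. apply Rmax_l.
 - rewrite seq_S, rsum_app, rsum_cons, rsum_nil. simpl (0 + N)%nat.
   destruct (classic (x <= INR N <= x + L)) as [H|H].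
   + rewrite indic_true by auto. rewrite (rsum_ext _ _ (fun k => indic (x <= INR k <= x + (INR N - 1 - x)))).
     * specialize (IHN x (INR N - 1 - x)). unfold Rmax in *.
       destruct (Rle_dec 0 (INR N - 1 - x + 1)), (Rle_dec 0 (L + 1)); lra.
     * intros k Hk. rewrite in_seq in Hk. apply indic_iff. assert (INR k + 1 <= INR N). { rewrite <- S_INR.
       apply le_INR. lia. } lra.
   + rewrite indic_false by auto. specialize (IHN x L). lra. Qed.

Lemma binom_ratio_step m p k A B s : 0 < p < 1 -> (k < m)%nat -> 0 < s -> s * s = INR m -> 0 <= A ->
  Rabs (INR k - INR m * p) <= A * s -> 0 < INR m * p * (1 - p) - A * s ->
  A * INR m + s <= B * (INR m * p * (1 - p) - A * s) ->
  (1 - B / s) * binom_pmf m p k <= binom_pmf m p (S k) /\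
    (1 - B / s) * binom_pmf m p (S k) <= binom_pmf m p k.
Proof. intros Hp Hk Hs Hss HA Hu HD HB.
 pose proof (binom_pmf_succ m p k Hk) as E. rewrite S_INR, minus_INR in E by lia.
 set (a := binom_pmf m p k) in *. set (b := binom_pmf m p (S k)) in *.
 assert (Ha : 0 <= a) by (apply binom_pmf_nonneg; lra). assert (Hb : 0 <= b) by (apply binom_pmf_nonneg; lra).
 set (t := B / s). assert (Ht : t * s = B) by (unfold t; field; lra).
 set (D := INR m * p * (1 - p)) in *. set (u := INR k - INR m * p) in *.
 assert (Hkm : INR k + 1 <= INR m). { rewrite <- S_INR. apply le_INR; lia. }
 assert (Hk0 : 0 <= INR k) by apply pos_INR.
 assert (HtD : A * s + 1 <= t * (D - A * s)).
 { apply (Rmult_le_reg_r s); auto. replace (t * (D - A * s) * s) with ((t * s) * (D - A * s)) by ring.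
   rewrite Ht. nra. }
 assert (Hua : - (A * s) <= u <= A * s) by (unfold Rabs in Hu; destruct (Rcase_abs u); lra).
 assert (Ht0 : 0 <= t). { destruct (Rle_dec 0 t); auto. nra. }
 assert (HY : (INR k + 1) * (1 - p) = D + u * (1 - p) + (1 - p)) by (unfold D, u; ring).
 assert (HX : (INR m - INR k) * p = D - u * p) by (unfold D, u; ring).
 assert (HuY : D - A * s <= D + u * (1 - p) + (1 - p)) by nra.
 assert (HuX : D - A * s <= D - u * p) by nra.
 split.
 - assert (Y0 : 0 < (INR k + 1) * (1 - p)) by nra.
   apply (Rmult_le_reg_r ((INR k + 1) * (1 - p))); auto. rewrite E.
   assert ((1 - t) * ((INR k + 1) * (1 - p)) <= (INR m - INR k) * p).
   { rewrite HY, HX. assert (t * (D - A * s) <= t * (D + u * (1 - p) + (1 - p))) by (apply Rmult_le_compat_l;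
     lra). nra. }
   fold t. nra.
 - assert (X0 : 0 < (INR m - INR k) * p) by nra.
   apply (Rmult_le_reg_r ((INR m - INR k) * p)); auto. rewrite <- E.
   assert ((1 - t) * ((INR m - INR k) * p) <= (INR k + 1) * (1 - p)).
   { rewrite HY, HX. assert (t * (D - A * s) <= t * (D - u * p)) by (apply Rmult_le_compat_l; lra). nra. }
   fold t. nra. Qed.

Lemma binom_ratio_near_mean m p k A delta s : 0 < delta <= 1/2 -> delta <= p <= 1 - delta -> 1 <= s ->
  s * s = INR m -> 0 <= A ->
  4 * A / delta <= s -> (k < m)%nat -> Rabs (INR k - INR m * p) <= A * s ->
  (1 - (4 * (A + 1) / delta) / s) * binom_pmf m p k <= binom_pmf m p (S k) /\
  (1 - (4 * (A + 1) / delta) / s) * binom_pmf m p (S k) <= binom_pmf m p k.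
Proof. intros Hd Hp Hs Hss HA HsA Hk Hu. assert (Hpq : delta / 2 <= p * (1 - p)) by nra.
 assert (HAs : A * s <= delta * INR m / 4). { rewrite <- Hss. apply (Rmult_le_reg_r (4 / delta)).
   apply Rdiv_lt_0_compat; lra.
   replace (delta * (s * s) / 4 * (4 / delta)) with (s * s) by (field; lra).
     replace (A * s * (4 / delta)) with (4 * A / delta * s) by (field; lra). nra. }
 assert (HD : delta * INR m / 2 <= INR m * p * (1 - p)). { assert (0 <= INR m) by apply pos_INR. nra. }
 assert (Hm1 : 1 <= INR m) by nra.
 apply (binom_ratio_step m p k A (4 * (A + 1) / delta) s); try lra.
 - auto.
 - nra.
 - assert (4 * (A + 1) / delta * (delta * INR m / 4) = (A + 1) * INR m) by (field; lra).
   assert (0 <= 4 * (A + 1) / delta) by (apply Rle_mult_inv_pos; lra).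
   assert (4 * (A + 1) / delta * (delta * INR m / 4) <=
     4 * (A + 1) / delta * (INR m * p * (1 - p) - A * s)) by (apply Rmult_le_compat_l; lra).
   nra. Qed.

Lemma argmax_nat (f : nat -> R) N : exists k0, (k0 <= N)%nat /\ forall k, (k <= N)%nat -> f k <= f k0.
Proof. induction N.
 - exists 0%nat. split; auto. intros k Hk. replace k with 0%nat by lia. lra.
 - destruct IHN as [k0 [Hk0 H]]. destruct (Rle_dec (f (S N)) (f k0)).
   + exists k0. split; [lia|]. intros k Hk. destruct (Nat.eq_dec k (S N)); subst; auto. apply H; lia.
   + exists (S N). split; auto. intros k Hk. destruct (Nat.eq_dec k (S N)); subst; [lra|].
     specialize (H k ltac:(lia)). lra. Qed.

Lemma rsum_seq_offset a n f : rsum (seq a n) f = rsum (seq 0 n) (fun i => f (a + i)%nat).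
Proof. revert f. induction a; intros f. simpl. reflexivity. rewrite rsum_seq_shift, IHa. apply rsum_ext.
  intros. f_equal. Qed.

Lemma rsum_sub_seq (f : nat -> R) a n m : (a + n <= m)%nat -> (forall i, 0 <= f i) ->
  rsum (seq a n) f <= rsum (seq 0 m) f.
Proof. intros H Hf. replace m with (a + n + (m - a - n))%nat by lia. rewrite !seq_app, !rsum_app.
  simpl (0 + a)%nat.
 assert (0 <= rsum (seq 0 a) f) by (apply rsum_nonneg; auto).
 assert (0 <= rsum (seq (0 + (a + n)) (m - a - n)) f) by (apply rsum_nonneg; auto). lra. Qed.

Lemma sqrt_nat_bounds m s : s * s = INR m -> 0 <= s -> INR (Nat.sqrt m) <= s /\ s < INR (Nat.sqrt m) + 1.
Proof. intros Hs Hs0. destruct (Nat.sqrt_spec' m) as [H1 H2]. apply le_INR in H1. apply lt_INR in H2.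
 rewrite mult_INR in H1, H2. rewrite S_INR in H2. pose proof (pos_INR (Nat.sqrt m)). split; nra. Qed.

Lemma binom_mode_near_mean m p k0 : 0 < p < 1 -> (k0 <= m)%nat -> (forall k, (k <= m)%nat ->
  binom_pmf m p k <= binom_pmf m p k0) ->
  Rabs (INR k0 - INR m * p) <= 1.
Proof. intros Hp Hk0 H. assert (Hm : INR k0 <= INR m) by (apply le_INR; auto).
 assert (L : INR m * p - 1 <= INR k0).
 { destruct (Nat.eq_dec k0 m) as [->|Hne]. pose proof (pos_INR m). nra.
   pose proof (binom_pmf_succ m p k0 ltac:(lia)) as E. rewrite S_INR, minus_INR in E by lia.
   pose proof (H (S k0) ltac:(lia)). pose proof (binom_pmf_pos m p k0 Hp). pose proof (pos_INR k0).
   assert (binom_pmf m p k0 * ((INR m - INR k0) * p) <=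
     binom_pmf m p k0 * ((INR k0 + 1) * (1 - p))) by (rewrite <- E; apply Rmult_le_compat_r; nra).
   assert ((INR m - INR k0) * p <= (INR k0 + 1) * (1 - p)) by (apply (Rmult_le_reg_l (binom_pmf m p k0));
     auto). nra. }
 assert (U : INR k0 <= INR m * p + 1).
 { destruct k0 as [|k1]. simpl. assert (0 <= INR m) by apply pos_INR. nra.
   pose proof (binom_pmf_succ m p k1 ltac:(lia)) as E. rewrite S_INR, minus_INR in E by lia.
   pose proof (H k1 ltac:(lia)). pose proof (binom_pmf_pos m p (S k1) Hp). pose proof (pos_INR k1).
   rewrite S_INR in Hm.
   assert (binom_pmf m p (S k1) * ((INR k1 + 1) * (1 - p)) <=
     binom_pmf m p (S k1) * ((INR m - INR k1) * p)) by (rewrite E; apply Rmult_le_compat_r; nra).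
   assert ((INR k1 + 1) * (1 - p) <= (INR m - INR k1) * p) by (apply (Rmult_le_reg_l (binom_pmf m p (S k1)));
     auto). rewrite S_INR. nra. }
 unfold Rabs. destruct (Rcase_abs _); lra. Qed.

Lemma ratio_chain_between (f : nat -> R) c (P : nat -> Prop) : 0 <= c ->
  (forall j, P j -> c * f j <= f (S j) /\ c * f (S j) <= f j) ->
  forall k k', (forall j, (Nat.min k k' <= j < Nat.max k k')%nat -> P j) ->
  c ^ (Nat.max k k' - Nat.min k k') * f k' <= f k.
Proof. intros Hc H k k' Hj. destruct (le_lt_dec k' k) as [Hle|Hlt].
 - rewrite Nat.max_l, Nat.min_r in * by lia.
   destruct (ratio_chain f c P Hc H (k - k') k') as [H1 _]; [intros j ?; apply Hj; lia|].
   replace (k' + (k - k'))%nat with k in H1 by lia. exact H1.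
 - rewrite Nat.max_r, Nat.min_l in * by lia.
   destruct (ratio_chain f c P Hc H (k' - k) k) as [_ H1]; [intros j ?; apply Hj; lia|].
   replace (k + (k' - k))%nat with k' in H1 by lia. exact H1. Qed.

(* Within [A sqrt m] of the mean consecutive binomial weights have ratio [1 + O(1 / sqrt m)],
   and two such points are [O(sqrt m)] steps apart: their weights are comparable. *)
Lemma binom_pmf_compare m p delta A k k' : 0 < delta <= 1/2 -> delta <= p <= 1 - delta -> 0 <= A ->
  8 * (A + 1) / delta <= sqrt (INR m) -> (k <= m)%nat -> (k' <= m)%nat ->
  Rabs (INR k - INR m * p) <= A * sqrt (INR m) -> Rabs (INR k' - INR m * p) <= A * sqrt (INR m) ->
  exp (-16 * A * (A + 1) / delta) * binom_pmf m p k' <= binom_pmf m p k.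
Proof. intros Hd Hp HA Hs Hk Hk' Hkw Hkw'. set (s := sqrt (INR m)) in *.
 assert (Hss : s * s = INR m) by (apply sqrt_sqrt, pos_INR).
 set (B := 4 * (A + 1) / delta).
 assert (HB2 : 2 * B <= s) by (unfold B; replace (2 * (4 * (A + 1) / delta)) with (8 *
   (A + 1) / delta) by (field; lra); lra).
 assert (HB0 : 4 <= B) by (unfold B; apply (Rmult_le_reg_r delta); [lra|]; unfold Rdiv;
   rewrite Rmult_assoc, Rinv_l by lra; nra).
 assert (HBs : 0 <= B / s <= 1/2) by (split; [apply Rle_mult_inv_pos|apply (Rmult_le_reg_r s); [|unfold Rdiv;
   rewrite Rmult_assoc, Rinv_l]]; lra).
 assert (Hstep : forall j, (j < m)%nat /\ Rabs (INR j - INR m * p) <= A * s ->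
   (1 - B / s) * binom_pmf m p j <= binom_pmf m p (S j) /\
     (1 - B / s) * binom_pmf m p (S j) <= binom_pmf m p j).
 { intros j [Hj1 Hj2]. apply (binom_ratio_near_mean m p j A delta s); try lra; auto.
   unfold B in HB2. apply (Rle_trans _ (8 * (A + 1) / delta)); [|lra].
   apply Rmult_le_compat_r; [apply Rlt_le, Rinv_0_lt_compat|]; lra. }
 assert (Habs : forall x, Rabs x <= A * s -> - (A * s) <= x <= A * s)
   by (intros x Hx; unfold Rabs in Hx; destruct (Rcase_abs x); lra).
 apply Habs in Hkw, Hkw'.
 assert (Hmin : INR (Nat.min k k') + A * s >= INR m * p /\ INR (Nat.max k k') - A * s <= INR m * p).
 { destruct (Nat.min_spec k k') as [[_ ->]|[_ ->]]; destruct (Nat.max_spec k k') as [[_ ->]|[_ ->]]; lra. }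
 eapply Rle_trans; [|apply (ratio_chain_between (binom_pmf m p) (1 - B / s) _ ltac:(lra) Hstep k k')].
 - apply Rmult_le_compat_r; [apply binom_pmf_nonneg; lra|].
   eapply Rle_trans; [|apply exp_le_pow_1_sub; lra]. apply exp_le_exp.
   assert (Hn : INR (Nat.max k k' - Nat.min k k') <= 2 * (A * s))
     by (rewrite minus_INR by lia; destruct Hmin; lra).
   assert (B / s * INR (Nat.max k k' - Nat.min k k') <= B / s * (2 * (A * s))) by (apply Rmult_le_compat_l;
     lra).
   replace (B / s * (2 * (A * s))) with (2 * A * B) in H by (field; lra).
   replace (-16 * A * (A + 1) / delta) with (-2 * 2 * A * B) by (unfold B; field; lra). nra.
 - intros j Hj. split; [lia|].
   assert (INR (Nat.min k k') <= INR j <= INR (Nat.max k k')) by (split; apply le_INR; lia).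
   destruct (Nat.min_spec k k') as [[_ E1]|[_ E1]]; destruct (Nat.max_spec k k') as [[_ E2]|[_ E2]];
     rewrite E1, E2 in *; unfold Rabs; destruct (Rcase_abs (INR j - INR m * p)); lra. Qed.

Lemma binom_chebyshev_in m p t : 0 <= p <= 1 -> 0 < t ->
  1 - INR m * p * (1 - p) / t ^ 2 <=
  rsum (seq 0 (S m)) (fun k => binom_pmf m p k * indic (Rabs (INR k - INR m * p) <= t)).
Proof. intros Hp Ht. pose proof (binom_chebyshev m p t Hp Ht).
 assert (rsum (seq 0 (S m)) (fun k => binom_pmf m p k * indic (Rabs (INR k - INR m * p) <= t)) =
   1 - rsum (seq 0 (S m)) (fun k => binom_pmf m p k * indic (t < Rabs (INR k - INR m * p)))).
 { rewrite <- (binom_pmf_sum m p), <- rsum_minus. apply rsum_ext. intros k _.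
   destruct (Rle_lt_dec (Rabs (INR k - INR m * p)) t).
   - rewrite indic_true, indic_false by lra. ring.
   - rewrite indic_false, indic_true by lra. ring. }
 lra. Qed.

Lemma rsum_window_le N (f : nat -> R) x s M : 0 <= s -> 0 <= M ->
  (forall k, (k < N)%nat -> Rabs (INR k - x) <= s -> 0 <= f k <= M) ->
  rsum (seq 0 N) (fun k => f k * indic (Rabs (INR k - x) <= s)) <= M * (2 * s + 1).
Proof. intros Hs HM Hf.
 apply (Rle_trans _ (M * rsum (seq 0 N) (fun k => indic (x - s <= INR k <= x - s + 2 * s)))).
 - rewrite <- rsum_scal. apply rsum_le. intros k Hk. rewrite in_seq in Hk.
   assert (Hiff : Rabs (INR k - x) <= s <-> x - s <= INR k <= x - s + 2 * s)
     by (unfold Rabs; destruct (Rcase_abs (INR k - x)); split; intros; lra).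
   rewrite (indic_iff _ _ Hiff). destruct (classic (x - s <= INR k <= x - s + 2 * s)) as [Hw|Hw].
   + rewrite indic_true by auto. specialize (Hf k ltac:(lia) (proj2 Hiff Hw)). lra.
   + rewrite indic_false by auto. lra.
 - apply Rmult_le_compat_l; auto. pose proof (count_in_window N (x - s) (2 * s)) as Hc.
   rewrite Rmax_right in Hc by lra. lra. Qed.

Theorem binom_pmf_upper m p delta : 0 < delta <= 1/2 -> delta <= p <= 1 - delta ->
  24 / delta <= sqrt (INR m) ->
  forall k, (k <= m)%nat -> binom_pmf m p k <= exp (96 / delta) / sqrt (INR m).
Proof. intros Hd Hp Hs k Hk. set (s := sqrt (INR m)) in *.
 assert (Hss : s * s = INR m) by (apply sqrt_sqrt, pos_INR).
 assert (HdS : 24 <= delta * s). { apply (Rmult_le_reg_r (/ delta)). apply Rinv_0_lt_compat; lra.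
   replace (delta * s * / delta) with s by (field; lra). exact Hs. }
 assert (Hs1 : 1 <= s) by nra.
 destruct (argmax_nat (binom_pmf m p) m) as [k0 [Hk0 Hmax]].
 pose proof (binom_mode_near_mean m p k0 ltac:(lra) Hk0 Hmax) as Hmode.
 set (J := Nat.sqrt m). destruct (sqrt_nat_bounds m s Hss ltac:(lra)) as [HJ1 HJ2]. fold J in HJ1, HJ2.
 assert (HkJ : (k0 + J <= m)%nat).
 { apply INR_le. rewrite plus_INR. unfold Rabs in Hmode. destruct (Rcase_abs (INR k0 - INR m * p)); nra. }
 assert (Hflat : forall i, (i <= J)%nat -> exp (- (96 / delta)) * binom_pmf m p k0 <= binom_pmf m p (k0 + i)).
 { intros i Hi. replace (- (96 / delta)) with (-16 * 2 * (2 + 1) / delta) by (field; lra).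
   assert (INR i <= INR J) by (apply le_INR; auto).
   apply binom_pmf_compare; fold s; try lra; try lia.
   rewrite plus_INR. unfold Rabs in *.
   pose proof (pos_INR i). destruct (Rcase_abs (INR k0 - INR m * p)), (Rcase_abs (INR k0 + INR i - INR m *
     p)); lra. }
 assert (Hsum : INR (S J) * (exp (- (96 / delta)) * binom_pmf m p k0) <= 1).
 { rewrite <- (binom_pmf_sum m p).
   replace (INR (S J) * _) with (rsum (seq 0 (S J)) (fun _ => exp (- (96 / delta)) * binom_pmf m p k0))
     by (rewrite rsum_const, length_seq; reflexivity).
   eapply Rle_trans; [|apply (rsum_sub_seq _ k0 (S J))].
   - rewrite (rsum_seq_offset k0). apply rsum_le. intros i Hi. rewrite in_seq in Hi. apply Hflat. lia.
   - lia.
   - intros; apply binom_pmf_nonneg; lra. }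
 rewrite S_INR, exp_Ropp in Hsum. pose proof (exp_pos (96 / delta)).
 apply (Rle_trans _ (binom_pmf m p k0)); [apply Hmax; auto|].
 apply (Rmult_le_reg_r s); [lra|]. unfold Rdiv. rewrite Rmult_assoc, Rinv_l by lra.
 assert (binom_pmf m p k0 * s <= binom_pmf m p k0 * (INR J + 1)) by (apply Rmult_le_compat_l;
   [apply binom_pmf_nonneg|]; lra).
 assert (H3 : exp (96 / delta) * ((INR J + 1) * (/ exp (96 / delta) * binom_pmf m p k0)) <=
   exp (96 / delta) * 1)
   by (apply Rmult_le_compat_l; lra).
 replace (exp (96 / delta) * ((INR J + 1) * (/ exp (96 / delta) * binom_pmf m p k0)))
   with (binom_pmf m p k0 * (INR J + 1)) in H3 by (field; lra). lra. Qed.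

(* The mass within [sqrt m] of the mean is at least [3/4] (Chebyshev) and spread over at most
   [3 sqrt m] integers, each weight comparable to [binom_pmf m p k]. *)
Theorem binom_pmf_lower m p delta A : 0 < delta <= 1/2 -> delta <= p <= 1 - delta -> 1 <= A ->
  8 * (A + 1) / delta <= sqrt (INR m) ->
  forall k, (k <= m)%nat -> Rabs (INR k - INR m * p) <= A * sqrt (INR m) ->
  exp (-16 * A * (A + 1) / delta) / 4 / sqrt (INR m) <= binom_pmf m p k.
Proof. intros Hd Hp HA Hs k Hk Hkw. set (s := sqrt (INR m)) in *.
 assert (Hss : s * s = INR m) by (apply sqrt_sqrt, pos_INR).
 assert (H8 : 32 <= 8 * (A + 1) / delta)
   by (apply (Rmult_le_reg_r delta); [lra|]; unfold Rdiv; rewrite Rmult_assoc, Rinv_l by lra; nra).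
 set (X := 16 * A * (A + 1) / delta).
 assert (Hin : 3 / 4 <= rsum (seq 0 (S m)) (fun k' => binom_pmf m p k' * indic (Rabs (INR k' - INR m * p) <=
   s))).
 { eapply Rle_trans; [|apply binom_chebyshev_in; lra].
   replace (INR m * p * (1 - p) / s ^ 2) with (p * (1 - p)) by (simpl; rewrite <- Hss; field; lra).
   pose proof (pow2_ge_0 (p - 1/2)). simpl in *. nra. }
 assert (Hwin : rsum (seq 0 (S m)) (fun k' => binom_pmf m p k' * indic (Rabs (INR k' - INR m * p) <= s))
     <= exp X * binom_pmf m p k * (2 * s + 1)).
 { apply rsum_window_le; try lra.
   - apply Rmult_le_pos; [apply Rlt_le, exp_pos|apply binom_pmf_nonneg; lra].
   - intros k' Hk' Hw. split; [apply binom_pmf_nonneg; lra|].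
     assert (Hw' : Rabs (INR k' - INR m * p) <= A * s) by (assert (0 <= s) by lra; nra).
     pose proof (binom_pmf_compare m p delta A k k' Hd Hp ltac:(lra) Hs Hk ltac:(lia) Hkw Hw') as Hc.
     replace (-16 * A * (A + 1) / delta) with (- X) in Hc by (unfold X; field; lra).
     rewrite exp_Ropp in Hc. pose proof (exp_pos X).
     apply (Rmult_le_reg_l (/ exp X)); [apply Rinv_0_lt_compat; lra|].
     rewrite <- Rmult_assoc, Rinv_l, Rmult_1_l by lra. exact Hc. }
 replace (-16 * A * (A + 1) / delta) with (- X) by (unfold X; field; lra). rewrite exp_Ropp.
 pose proof (exp_pos X). pose proof (binom_pmf_nonneg m p k ltac:(lra)).
 assert (1 <= exp X * binom_pmf m p k * (4 * s)) by nra.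
 unfold Rdiv. apply (Rmult_le_reg_r (4 * s * exp X)); [apply Rmult_lt_0_compat; lra|].
 replace (/ exp X * / 4 * / s * (4 * s * exp X)) with 1 by (field; lra). nra. Qed.

(** * The probability that independent binomials are balanced *)

Lemma rsum_indic_INR_le (l : list nat) K f U : NoDup l -> 0 <= U -> (forall k, In k l -> 0 <= f k <= U) ->
  rsum l (fun k => indic (INR k = K) * f k) <= U.
Proof. induction l as [|a l IH]; intros Hn HU Hf.
 - rewrite rsum_nil. auto.
 - inversion Hn; subst. rewrite rsum_cons. destruct (classic (INR a = K)) as [Ha|Ha].
   + rewrite indic_true by auto. rewrite (rsum_ext _ _ (fun _ => 0)). rewrite rsum_zero.
     specialize (Hf a (or_introl eq_refl)). lra.
     intros k Hk. rewrite indic_false. ring. intros E. rewrite <- Ha in E. apply INR_eq in E. subst. auto.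
   + rewrite indic_false by auto. rewrite Rmult_0_l, Rplus_0_l. apply IH; auto.
     intros; apply Hf; right; auto. Qed.

Lemma length_star_edges d : (1 <= d)%nat -> length (star_edges d) = (d - 1)%nat.
Proof. intros Hd. assert (P : Permutation (star_edges d) (map (fun r => (r, 0%nat)) (seq 1 (d - 1)))).
 { apply NoDup_Permutation. apply star_edges_NoDup. apply FinFun.Injective_map_NoDup.
   intros a b E; inversion E; auto. apply seq_NoDup.
   intros [r s]. rewrite star_edges_In, in_map_iff. simpl. split.
   - intros [H1 ->]. exists r. split; auto. rewrite in_seq. lia.
   - intros [x [E Hx]]. inversion E; subst. rewrite in_seq in Hx. lia. }
 rewrite (Permutation_length P), length_map, length_seq. reflexivity. Qed.

Definition edge_pmf (mu : nat -> nat -> nat) (y : nat -> nat -> R) (e : nat * nat) (k : nat) : R :=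
  binom_pmf (mu (fst e) (snd e)) (y (fst e) (snd e)) k.

Definition balance_prob d mu (y : nat -> nat -> R) :=
  rsum (boxes (offdiag d) mu) (fun w => indic (balanced d w) *
    rprod (offdiag d) (fun e => edge_pmf mu y e (w (fst e) (snd e)))).

Lemma box_sum_edge_pmf d mu y : (forall e, In e (offdiag d) -> 0 <= y (fst e) (snd e) <= 1) ->
  box_sum mu (nonstar_edges d) (fun w => rprod (nonstar_edges d)
    (fun e => edge_pmf mu y e (w (fst e) (snd e)))) (fun _ _ => 0%nat) = 1.
Proof. intros Hy.
 rewrite (box_sum_ext _ _ _ (fun w => (fun _ => 1) w * rprod (nonstar_edges d) (fun e =>
   (fun _ e k => edge_pmf mu y e k) w e (w (fst e) (snd e))))) by (intros; ring).
 rewrite (box_sum_rprod mu (nonstar_edges d) (fun _ => 1) (fun _ e k => edge_pmf mu y e k)); auto.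
 - rewrite Rmult_1_l. rewrite (rprod_ext _ _ (fun _ => 1)). rewrite rprod_const, pow1. reflexivity.
   intros e He. apply binom_pmf_sum.
 - apply nonstar_edges_NoDup. Qed.

Theorem balance_prob_upper d mu y U : (1 <= d)%nat -> 0 <= U ->
  (forall e, In e (offdiag d) -> 0 <= y (fst e) (snd e) <= 1) ->
  (forall e k, In e (offdiag d) -> (k <= mu (fst e) (snd e))%nat -> edge_pmf mu y e k <= U) ->
  balance_prob d mu y <= U ^ (d - 1).
Proof. intros Hd HU Hy Hb. unfold balance_prob.
  rewrite (rsum_balanced_star d mu (fun e k => edge_pmf mu y e k)) by auto.
 rewrite <- (Rmult_1_r (U ^ (d - 1))). rewrite <- (box_sum_edge_pmf d mu y Hy). rewrite <- box_sum_scal.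
 apply box_sum_le. intros w. rewrite Rmult_comm. apply Rmult_le_compat_r.
 - apply rprod_nonneg. intros e He. apply binom_pmf_nonneg. apply Hy. apply nonstar_edges_In in He; tauto.
 - rewrite <- (length_star_edges d Hd). rewrite <- rprod_const. apply rprod_le. intros e He.
   pose proof (star_edges_offdiag d e He) as He'.
   split.
   + apply rsum_nonneg. intros k _. apply Rmult_le_pos. apply indic_01. apply binom_pmf_nonneg; auto.
   + apply rsum_indic_INR_le; auto. unfold box_range; apply seq_NoDup. intros k Hk. unfold box_range in Hk.
     rewrite in_seq in Hk.
     split. apply binom_pmf_nonneg; auto. apply Hb; auto. lia. Qed.

Lemma length_others d r : (length (others d r) <= d)%nat.
Proof. unfold others. eapply Nat.le_trans; [apply filter_length_le|]. rewrite length_seq. lia. Qed.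

Lemma star_flow_int d w r : exists a b : nat, star_flow d w r = INR a - INR b.
Proof. unfold star_flow. destruct (Nat.eqb r 0). exists 0%nat, 0%nat. simpl; ring.
 rewrite rsum_INR. rewrite (rsum_ext _ _ (fun s => INR (if Nat.eqb s 0 then 0%nat else w r s))).
 rewrite rsum_INR. eexists; eexists; reflexivity. intros s _. destruct (Nat.eqb s 0); reflexivity. Qed.

(* Balance at [r] forces the star edge [(r,0)] to carry [star_flow]; its deviation from the mean
   is a sum of at most [2 d] deviations of non-star edges. *)
Lemma star_flow_deviation d mu y w t r : (1 <= r < d)%nat -> 0 <= t ->
  rsum (others d r) (fun s => INR (mu r s) * y r s) = rsum (others d r) (fun s => INR (mu s r) * y s r) ->
  (forall e, In e (nonstar_edges d) ->
     Rabs (INR (w (fst e) (snd e)) - INR (mu (fst e) (snd e)) * y (fst e) (snd e)) <= t) ->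
  Rabs (star_flow d w r - INR (mu r 0%nat) * y r 0%nat) <= 2 * INR d * t.
Proof. intros Hr Ht Hb Hg. unfold star_flow. destruct (Nat.eqb_spec r 0); [lia|].
 rewrite (rsum_others_split0 d r (fun s => INR (mu r s) * y r s)) in Hb by lia. cbv beta in Hb.
 replace (rsum (others d r) (fun s => INR (w s r)) - rsum (others d r)
   (fun s => if Nat.eqb s 0 then 0 else INR (w r s)) - INR (mu r 0%nat) * y r 0%nat)
   with (rsum (others d r) (fun s => INR (w s r) - INR (mu s r) * y s r) - rsum (others d r)
     (fun s => if Nat.eqb s 0 then 0 else INR (w r s) - INR (mu r s) * y r s)).
 2:{ rewrite !rsum_minus. rewrite (rsum_ext _ (fun s => if Nat.eqb s 0 then 0 else INR (w r s) -
   INR (mu r s) * y r s)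
       (fun s => (if Nat.eqb s 0 then 0 else INR (w r s)) - (if Nat.eqb s 0 then 0 else INR (mu r s) *
         y r s))).
     rewrite rsum_minus. lra. intros s _. destruct (Nat.eqb s 0); ring. }
 assert (Hl : INR (length (others d r)) <= INR d) by (apply le_INR, length_others).
 assert (B1 : Rabs (rsum (others d r) (fun s => INR (w s r) - INR (mu s r) * y s r)) <=
   INR (length (others d r)) * t).
 { apply rsum_abs_le. intros s Hs. apply others_In in Hs. apply (Hg (s, r)). apply nonstar_edges_In. split.
   apply offdiag_In; lia. simpl; lia. }
 assert (B2 : Rabs (rsum (others d r) (fun s => if Nat.eqb s 0 then 0 else INR (w r s) - INR (mu r s) *
   y r s)) <= INR (length (others d r)) * t).
 { apply rsum_abs_le. intros s Hs. apply others_In in Hs. destruct (Nat.eqb_spec s 0). rewrite Rabs_R0; lra.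
   apply (Hg (r, s)). apply nonstar_edges_In. split. apply offdiag_In; lia. simpl; lia. }
 eapply Rle_trans; [apply Rabs_triang|]. rewrite Rabs_Ropp.
 assert (INR (length (others d r)) * t <= INR d * t) by (apply Rmult_le_compat_r; lra). lra. Qed.

Lemma nonstar_near_mean_prob d mu y t : 0 < t ->
  (forall e, In e (offdiag d) -> 0 <= y (fst e) (snd e) <= 1) ->
  (forall e, In e (offdiag d) -> INR (mu (fst e) (snd e)) * y (fst e) (snd e) * (1 - y (fst e) (snd e)) <=
    t ^ 2 / 4) ->
  (3 / 4) ^ length (nonstar_edges d) <=
  box_sum mu (nonstar_edges d) (fun w => rprod (nonstar_edges d)
    (fun e => edge_pmf mu y e (w (fst e) (snd e)) *
    indic (Rabs (INR (w (fst e) (snd e)) - INR (mu (fst e) (snd e)) * y (fst e) (snd e)) <=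
      t))) (fun _ _ => 0%nat).
Proof. intros Ht Hy Hvar.
 rewrite (box_sum_ext _ _ _ (fun w => 1 * rprod (nonstar_edges d) (fun e =>
   (fun _ e k => edge_pmf mu y e k * indic (Rabs (INR k - INR (mu (fst e) (snd e)) * y (fst e) (snd e)) <=
     t)) w e (w (fst e) (snd e)))))
   by (intros; ring).
 rewrite (box_sum_rprod mu (nonstar_edges d) (fun _ => 1)
   (fun _ e k => edge_pmf mu y e k * indic (Rabs (INR k - INR (mu (fst e) (snd e)) * y (fst e) (snd e)) <=
     t)));
   auto using nonstar_edges_NoDup.
 rewrite Rmult_1_l, <- rprod_const. apply rprod_le. intros e He.
 assert (He' : In e (offdiag d)) by (apply nonstar_edges_In in He; tauto). split; [lra|].
 eapply Rle_trans; [|apply binom_chebyshev_in; auto].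
 specialize (Hvar e He'). assert (0 < t ^ 2) by (apply pow_lt; lra).
 assert (INR (mu (fst e) (snd e)) * y (fst e) (snd e) * (1 - y (fst e) (snd e)) / t ^ 2 <= 1 / 4).
 { unfold Rdiv. apply (Rmult_le_reg_r (t ^ 2)); auto. rewrite Rmult_assoc, Rinv_l by lra. lra. }
 lra. Qed.

Theorem balance_prob_lower d mu y t L : (1 <= d)%nat -> 0 < t -> 0 <= L ->
  (forall e, In e (offdiag d) -> 0 <= y (fst e) (snd e) <= 1) ->
  (forall r, (r < d)%nat -> rsum (others d r) (fun s => INR (mu r s) * y r s) =
    rsum (others d r) (fun s => INR (mu s r) * y s r)) ->
  (forall e, In e (offdiag d) -> INR (mu (fst e) (snd e)) * y (fst e) (snd e) * (1 - y (fst e) (snd e)) <=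
    t ^ 2 / 4) ->
  (forall e x, In e (star_edges d) -> Rabs (x - INR (mu (fst e) (snd e)) * y (fst e) (snd e)) <=
    2 * INR d * t -> 0 <= x) ->
  (forall e k, In e (star_edges d) -> Rabs (INR k - INR (mu (fst e) (snd e)) * y (fst e) (snd e)) <=
    2 * INR d * t ->
     (k <= mu (fst e) (snd e))%nat /\ L <= edge_pmf mu y e k) ->
  L ^ (d - 1) * (3 / 4) ^ (length (nonstar_edges d)) <= balance_prob d mu y.
Proof. intros Hd Ht HL Hy Hbal Hvar HK HQ. unfold balance_prob.
 rewrite (rsum_balanced_star d mu (fun e k => edge_pmf mu y e k)) by auto.
 set (good := fun (w : nat -> nat -> nat) => forall e, In e (nonstar_edges d) ->
   Rabs (INR (w (fst e) (snd e)) - INR (mu (fst e) (snd e)) * y (fst e) (snd e)) <= t).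
 assert (Hyo : forall e, In e (nonstar_edges d) ->
   0 <= y (fst e) (snd e) <= 1) by (intros e He; apply Hy; apply nonstar_edges_In in He; tauto).
 eapply Rle_trans; [|apply (box_sum_le _ _ (fun w => L ^ (d - 1) * rprod (nonstar_edges d) (fun e =>
     edge_pmf mu y e (w (fst e) (snd e)) * indic (Rabs (INR (w (fst e) (snd e)) - INR (mu (fst e) (snd e)) *
       y (fst e) (snd e)) <= t))))].
 - rewrite box_sum_scal. apply Rmult_le_compat_l; [apply pow_le; auto|]. apply nonstar_near_mean_prob; auto.
 - intros w. rewrite rprod_mult. rewrite <- (indic_forall_rprod (nonstar_edges d)
   (fun e => Rabs (INR (w (fst e) (snd e)) - INR (mu (fst e) (snd e)) * y (fst e) (snd e)) <= t)).
   assert (HP : 0 <= rprod (nonstar_edges d) (fun e => edge_pmf mu y e (w (fst e) (snd e)))).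
   { apply rprod_nonneg. intros e He. apply binom_pmf_nonneg; auto. }
   assert (HQ0 : 0 <= rprod (star_edges d) (fun e => rsum (box_range mu e) (fun k => indic (INR k =
     star_flow d w (fst e)) * edge_pmf mu y e k))).
   { apply rprod_nonneg. intros e He. apply rsum_nonneg. intros k _. apply Rmult_le_pos. apply indic_01.
     apply binom_pmf_nonneg.
     apply Hy, (star_edges_offdiag d e He). }
   destruct (classic (good w)) as [Hg|Hg].
   + rewrite indic_true by exact Hg. rewrite Rmult_1_r. rewrite Rmult_comm. apply Rmult_le_compat_l; auto.
     rewrite <- (length_star_edges d Hd), <- rprod_const. apply rprod_le. intros [r s0] He. split; auto.
     pose proof He as He2. apply star_edges_In in He2. simpl in He2. destruct He2 as [Hr ->].
       simpl fst; simpl snd.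
     pose proof (star_flow_deviation d mu y w t r ltac:(lia) ltac:(lra) (Hbal r ltac:(lia)) Hg) as Hdev.
     pose proof (HK (r, 0%nat) _ He Hdev) as HK0. simpl in HK0.
     destruct (star_flow_int d w r) as [a [b Hab]]. rewrite Hab in HK0, Hdev.
     assert (Hba : (b <= a)%nat). { apply INR_le. lra. }
     rewrite <- minus_INR in Hdev by auto. destruct (HQ (r, 0%nat) (a - b)%nat He Hdev) as [Hkm HLk].
       simpl in Hkm, HLk.
     eapply Rle_trans; [exact HLk|].
     eapply Rle_trans; [|apply (rsum_ge_term _ _ (a - b)%nat)].
     * cbv beta. rewrite indic_true. lra. rewrite Hab, minus_INR by auto. reflexivity.
     * unfold box_range. rewrite in_seq. simpl. lia.
     * intros k _. apply Rmult_le_pos. apply indic_01. apply binom_pmf_nonneg.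
       apply (Hy (r, 0%nat)), (star_edges_offdiag d _ He).
   + rewrite indic_false by exact Hg. rewrite Rmult_0_r, Rmult_0_r. apply Rmult_le_pos; auto.
Qed.

(** * The Bernoulli log-moment generating function and exponential tilting *)

Lemma ln_le x y : 0 < x -> x <= y -> ln x <= ln y.
Proof. intros Hx H. destruct (Rle_lt_or_eq_dec _ _ H). apply Rlt_le, ln_increasing; auto. subst; lra. Qed.
Lemma ln_div x y : 0 < x -> 0 < y -> ln (x / y) = ln x - ln y.
Proof. intros. unfold Rdiv. rewrite ln_mult, ln_Rinv; auto. apply Rinv_0_lt_compat; auto. Qed.
Lemma ln_le_sub1 z : 0 < z -> ln z <= z - 1.
Proof. intros Hz. pose proof (exp_ineq1_le (ln z)). rewrite exp_ln in H; auto. lra. Qed.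

Lemma xlog_gibbs x y a : 0 <= x -> 0 < y -> 0 < a -> x * ln (y / a) + (x - y) <= x * ln (x / a).
Proof. intros Hx Hy Ha. destruct (Rle_lt_or_eq_dec 0 x Hx) as [Hx0|<-]; [|lra].
 rewrite !ln_div by lra. assert (ln (y / x) <= y / x - 1) by (apply ln_le_sub1; apply Rdiv_lt_0_compat; lra).
 rewrite ln_div in H by lra. assert (x * (ln y - ln x) <= x * (y / x - 1)) by (apply Rmult_le_compat_l; lra).
 replace (x * (y / x - 1)) with (y - x) in H0 by (field; lra). nra. Qed.

Section LogMgf.
Variable al : R.
Hypothesis Hal : 0 < al < 1.

(* [log_mgf] is the cumulant generating function of a Bernoulli([al]) variable and
   [tilted_prob], its derivative, the success probability of the exponentially tilted law. *)
Definition bern_mgf t := 1 - al + al * exp t.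
Definition log_mgf t := ln (bern_mgf t).
Definition tilted_prob t := al * exp t / bern_mgf t.

Lemma bern_mgf_pos t : 0 < bern_mgf t.
Proof. unfold bern_mgf. pose proof (exp_pos t). nra. Qed.

Lemma tilted_prob_bounds t : 0 < tilted_prob t < 1.
Proof. unfold tilted_prob. pose proof (bern_mgf_pos t). pose proof (exp_pos t). split.
 - apply Rdiv_lt_0_compat; nra.
 - apply (Rmult_lt_reg_r (bern_mgf t)); auto. unfold Rdiv. rewrite Rmult_assoc, Rinv_l by lra.
   unfold bern_mgf. lra. Qed.

Lemma log_mgf_ge_ln_1_sub t : ln (1 - al) <= log_mgf t.
Proof. unfold log_mgf. apply ln_le. lra. unfold bern_mgf. pose proof (exp_pos t). nra. Qed.

Lemma log_mgf_ge_ln_add t : ln al + t <= log_mgf t.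
Proof. unfold log_mgf. replace (ln al + t) with (ln (al * exp t)) by (rewrite ln_mult, ln_exp;
  [reflexivity|lra|apply exp_pos]).
 apply ln_le. pose proof (exp_pos t). nra. unfold bern_mgf. lra. Qed.

Lemma log_mgf_0 : log_mgf 0 = 0.
Proof. unfold log_mgf, bern_mgf. rewrite exp_0. replace (1 - al + al * 1) with 1 by ring. apply ln_1. Qed.

Lemma log_mgf_lipschitz t t' : Rabs (log_mgf t - log_mgf t') <= Rabs (t - t').
Proof. assert (K : forall a b, a <= b -> 0 <= log_mgf b - log_mgf a <= b - a).
 { intros a b Hab. unfold log_mgf. pose proof (bern_mgf_pos a). pose proof (exp_pos a).
   pose proof (exp_pos b).
   assert (exp a <= exp b) by (apply exp_le_exp; auto).
   split. assert (ln (bern_mgf a) <= ln (bern_mgf b)) by (apply ln_le; auto; unfold bern_mgf; nra). lra.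
   assert (bern_mgf b <= exp (b - a) * bern_mgf a).
   { unfold bern_mgf. replace b with ((b - a) + a) at 1 by ring. rewrite exp_plus.
     assert (1 <= exp (b - a)) by (pose proof (exp_ineq1_le (b - a)); lra). nra. }
   assert (ln (bern_mgf b) <= ln (exp (b - a) * bern_mgf a)) by (apply ln_le; auto; apply bern_mgf_pos).
   rewrite ln_mult, ln_exp in H4 by (auto; apply exp_pos). lra. }
 destruct (Rle_dec t t').
 - specialize (K t t' r). rewrite Rabs_minus_sym, (Rabs_minus_sym t). rewrite !Rabs_right by lra. lra.
 - specialize (K t' t ltac:(lra)). rewrite !Rabs_right by lra. lra. Qed.

Lemma tilted_prob_le t t' : t <= t' -> tilted_prob t <= tilted_prob t'.
Proof. intros H. assert (E : forall u, tilted_prob u = 1 - (1 - al) / bern_mgf u).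
 { intros u. unfold tilted_prob. pose proof (bern_mgf_pos u). unfold bern_mgf in *. field. lra. }
 rewrite !E. pose proof (bern_mgf_pos t). pose proof (bern_mgf_pos t'). assert (bern_mgf t <= bern_mgf t').
 { unfold bern_mgf. assert (exp t <= exp t') by (apply exp_le_exp; auto). nra. }
 assert ((1 - al) / bern_mgf t' <= (1 - al) / bern_mgf t). { unfold Rdiv. apply Rmult_le_compat_l. lra.
   apply Rinv_le_contravar; auto. }
 lra. Qed.

Lemma log_mgf_derivative a c : derivable_pt_lim (fun h => log_mgf (a + c * h)) 0 (c * tilted_prob a).
Proof.
 assert (E : (fun h => log_mgf (a + c * h)) = comp ln
   (fun h => 1 - al + al * exp (a + c * h))) by reflexivity.
 rewrite E. replace (c * tilted_prob a) with (/ (1 - al + al * exp (a + c * 0)) * (al * (exp (a + c * 0) *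
   c))).
 2:{ rewrite Rmult_0_r, Rplus_0_r. unfold tilted_prob, bern_mgf. field. pose proof (bern_mgf_pos a).
   unfold bern_mgf in H. lra. }
 apply derivable_pt_lim_comp.
 - assert (E2 : (fun h => 1 - al + al * exp (a + c * h)) =
   plus_fct (fct_cte (1 - al)) (mult_real_fct al (comp exp (fun h => a + c * h)))) by reflexivity.
   rewrite E2. replace (al * (exp (a + c * 0) * c)) with (0 + al * (exp (a + c * 0) * c)) by ring.
   apply derivable_pt_lim_plus. apply derivable_pt_lim_const. apply derivable_pt_lim_scal.
   apply derivable_pt_lim_comp. 2: apply derivable_pt_lim_exp.
   assert (E3 : (fun h => a + c * h) = plus_fct (fct_cte a) (mult_real_fct c id)) by reflexivity.
   rewrite E3. assert (D : derivable_pt_lim (fct_cte a + mult_real_fct c id)%F 0 (0 + c *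
     1)) by (apply derivable_pt_lim_plus; [apply derivable_pt_lim_const| apply derivable_pt_lim_scal,
     derivable_pt_lim_id]).
   replace (0 + c * 1) with c in D by ring. exact D.
 - apply derivable_pt_lim_ln. pose proof (bern_mgf_pos (a + c * 0)). unfold bern_mgf in H. lra. Qed.

Lemma ln_tilted_ratio t : ln (tilted_prob t / al) = t - log_mgf t.
Proof. unfold tilted_prob, log_mgf. pose proof (bern_mgf_pos t).
  replace (al * exp t / bern_mgf t / al) with (exp t / bern_mgf t) by (field; lra).
 rewrite ln_div by (auto; apply exp_pos). rewrite ln_exp. ring. Qed.
Lemma ln_tilted_co_ratio t : ln ((1 - tilted_prob t) / (1 - al)) = - log_mgf t.
Proof. unfold tilted_prob, log_mgf. pose proof (bern_mgf_pos t).
  replace ((1 - al * exp t / bern_mgf t) / (1 - al)) with (/ bern_mgf t).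
 apply ln_Rinv; auto. unfold bern_mgf in *. field. lra. Qed.

Lemma KL_tilted t : KL (tilted_prob t) al = tilted_prob t * t - log_mgf t.
Proof. unfold KL. rewrite ln_tilted_ratio, ln_tilted_co_ratio. ring. Qed.

(* [KL x al] is the Legendre transform of [log_mgf]. *)
Lemma KL_ge_legendre x t : 0 <= x <= 1 -> x * t - log_mgf t <= KL x al.
Proof. intros Hx. pose proof (tilted_prob_bounds t) as Hy. set (y := tilted_prob t) in *.
 assert (R1 : x * t - log_mgf t = x * ln (y / al) + (1 - x) * ln ((1 - y) / (1 - al))) by (unfold y;
   rewrite ln_tilted_ratio, ln_tilted_co_ratio; ring).
 rewrite R1. unfold KL.
 pose proof (xlog_gibbs x y al ltac:(lra) ltac:(lra) ltac:(lra)).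
 pose proof (xlog_gibbs (1 - x) (1 - y) (1 - al) ltac:(lra) ltac:(lra) ltac:(lra)).
 lra. Qed.

Lemma binom_tilt m k t : (k <= m)%nat ->
  C m k * al ^ k * (1 - al) ^ (m - k) = binom_pmf m (tilted_prob t) k * exp (INR m * log_mgf t) *
    exp (- (INR k * t)).
Proof. intros Hk. unfold binom_pmf. pose proof (bern_mgf_pos t) as HZ.
 assert (E1 : al = tilted_prob t * bern_mgf t * exp (- t)). { unfold tilted_prob. rewrite exp_Ropp. field.
   split; [apply Rgt_not_eq, exp_pos|lra]. }
 assert (E2 : 1 - al = (1 - tilted_prob t) * bern_mgf t). { unfold tilted_prob, bern_mgf in *. field. lra. }
 assert (E3 : exp (INR m * log_mgf t) = bern_mgf t ^ k * bern_mgf t ^ (m - k)).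
 { rewrite <- pow_add. replace (k + (m - k))%nat with m by lia. rewrite <- exp_pow_n. unfold log_mgf.
   rewrite exp_ln; auto. }
 assert (E4 : exp (- (INR k * t)) = exp (- t) ^ k). { rewrite exp_pow_n. f_equal; ring. }
 rewrite E3, E4. rewrite E1 at 1. rewrite E2. rewrite !Rpow_mult_distr. ring. Qed.

End LogMgf.

(** * The dual function and its minimizer *)

Lemma lipschitz_continuity_pt (f : R -> R) L x : 0 <= L ->
  (forall c c', Rabs (f c - f c') <= L * Rabs (c - c')) -> continuity_pt f x.
Proof. intros HL H. unfold continuity_pt, continue_in, limit1_in, limit_in. intros eps Heps.
 exists (eps / (L + 1)). split. apply Rdiv_lt_0_compat; lra. intros x' [_ Hd]. simpl in *. unfold R_dist in *.
 eapply Rle_lt_trans. apply H. assert (eps / (L + 1) * L < eps).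
 { apply (Rmult_lt_reg_r (L + 1)); [lra|]. replace (eps / (L + 1) * L * (L + 1)) with (eps * L) by (field;
   lra). nra. }
 assert (L * Rabs (x' - x) <= L * (eps / (L + 1))) by (apply Rmult_le_compat_l; lra). lra. Qed.

Definition set_coord (l : nat -> R) i c : nat -> R := fun j => if Nat.eqb j i then c else l j.

Lemma set_coord_same l i c : set_coord l i c i = c. Proof. unfold set_coord. rewrite Nat.eqb_refl. auto. Qed.
Lemma set_coord_other l i c j : j <> i -> set_coord l i c j = l j. Proof. intros H. unfold set_coord.
  destruct (Nat.eqb_spec j i); tauto. Qed.
Lemma set_coord_id l i : set_coord l i (l i) = l.
Proof. apply functional_extensionality. intros j. unfold set_coord. destruct (Nat.eqb_spec j i); subst; auto.
  Qed.

(* Minimize coordinate by coordinate: the minimum over the remaining coordinates is again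
   Lipschitz in the first one, so the one-dimensional extreme value theorem applies. *)
Lemma box_argmin_lipschitz (F : (nat -> R) -> R) (L a b : R) (I : list nat) : NoDup I -> a <= b -> 0 <= L ->
  (forall l i c c', In i I -> Rabs (F (set_coord l i c) - F (set_coord l i c')) <= L * Rabs (c - c')) ->
  forall l0, exists ls, (forall i, ~ In i I -> ls i = l0 i) /\ (forall i, In i I -> a <= ls i <= b) /\
   forall l, (forall i, ~ In i I -> l i = l0 i) -> (forall i, In i I -> a <= l i <= b) -> F ls <= F l.
Proof. intros HI Hab HL. induction I as [|i I IH]; intros HF l0.
 - exists l0. split; [auto|]. split; [intros i []|]. intros l Hl _. replace l with l0; [lra|].
   apply functional_extensionality; intros j; symmetry; apply Hl; auto.
 - inversion HI as [|? ? Hni HnI]; subst. assert (HF' : forall l i0 c c', In i0 I ->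
   Rabs (F (set_coord l i0 c) - F (set_coord l i0 c')) <= L * Rabs (c - c'))
     by (intros; apply HF; right; auto).
   pose (lam := fun c => proj1_sig (constructive_indefinite_description _ (IH HnI HF' (set_coord l0 i c)))).
   assert (Hlam : forall c, (forall j, ~ In j I -> lam c j = set_coord l0 i c j) /\ (forall j, In j I ->
     a <= lam c j <= b) /\
      forall l, (forall j, ~ In j I -> l j = set_coord l0 i c j) -> (forall j, In j I -> a <= l j <= b) ->
        F (lam c) <= F l).
   { intros c. unfold lam. destruct (constructive_indefinite_description _ _) as [x Hx]. exact Hx. }
   set (Hf := fun c => F (lam c)).
   assert (Hli : forall c, lam c i = c). { intros c. destruct (Hlam c) as [H1 _]. rewrite H1 by auto.
     apply set_coord_same. }
   assert (Hlip1 : forall c c', Hf c <= Hf c' + L * Rabs (c - c')).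
   { intros c c'. unfold Hf. destruct (Hlam c) as [_ [_ H3]]. destruct (Hlam c') as [H1' [H2' _]].
     assert (F (lam c) <= F (set_coord (lam c') i c)).
     { apply H3.
       - intros j Hj. destruct (Nat.eq_dec j i) as [->|Hne]. rewrite !set_coord_same; auto.
         rewrite !set_coord_other by auto. rewrite H1' by auto. rewrite set_coord_other; auto.
       - intros j Hj. rewrite set_coord_other. apply H2'; auto. intros ->; auto. }
     pose proof (HF (lam c') i c c' (or_introl eq_refl)). assert (E : set_coord (lam c') i c' = lam c').
     { apply functional_extensionality; intros j; unfold set_coord; destruct (Nat.eqb_spec j i); subst; auto.
       }
     rewrite E in H0.
     pose proof (Rle_abs (F (set_coord (lam c') i c) - F (lam c'))). lra. }
   assert (Hcont : forall x, continuity_pt Hf x).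
   { intros x. apply (lipschitz_continuity_pt _ L); auto. intros c c'. pose proof (Hlip1 c c').
     pose proof (Hlip1 c' c).
     rewrite (Rabs_minus_sym c' c) in H0. unfold Rabs at 1. destruct (Rcase_abs (Hf c - Hf c')); lra. }
   destruct (continuity_ab_min Hf a b Hab (fun c _ => Hcont c)) as [cs [Hcs1 Hcs2]].
   exists (lam cs). destruct (Hlam cs) as [H1 [H2 H3']]. split; [|split].
   + intros j Hj. rewrite H1. rewrite set_coord_other; auto. intros ->; apply Hj; left; auto.
     intros Hj'; apply Hj; right; auto.
   + intros j [<-|Hj]. rewrite Hli; auto. apply H2; auto.
   + intros l Hl Hb. set (c := l i). assert (Hc : a <= c <= b) by (apply Hb; left; auto).
     apply (Rle_trans _ (Hf c)). apply Hcs1; auto.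
     destruct (Hlam c) as [_ [_ H3c]]. apply H3c.
     * intros j Hj. destruct (Nat.eq_dec j i) as [->|Hne]. rewrite set_coord_same. reflexivity.
       rewrite set_coord_other by auto. apply Hl. intros [E|E]; auto.
     * intros j Hj. apply Hb; right; auto. Qed.

Section Dual.
Variable d : nat.
Variable al : R.
Hypothesis Hal : 0 < al < 1.
Variable mu : nat -> nat -> nat.

(* The Lagrangian dual of [vartheta]: [vartheta mu] is minus its minimum ([vartheta_dual]). *)
Definition dual (l : nat -> R) := rsum (offdiag d)
  (fun e => INR (mu (fst e) (snd e)) * log_mgf al (l (fst e) - l (snd e))).
Definition total_mass := rsum (offdiag d) (fun e => INR (mu (fst e) (snd e))).

Lemma total_mass_nonneg : 0 <= total_mass. Proof. apply rsum_nonneg; intros; apply pos_INR. Qed.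

Lemma dual_lipschitz l i c c' : Rabs (dual (set_coord l i c) - dual (set_coord l i c')) <=
  total_mass * Rabs (c - c').
Proof. unfold dual, total_mass. rewrite <- rsum_minus. eapply Rle_trans; [apply rsum_abs|].
  rewrite <- rsum_scalr. apply rsum_le.
 intros [r s] _. simpl. rewrite <- Rmult_minus_distr_l.
   rewrite Rabs_mult, Rabs_right by (apply Rle_ge, pos_INR).
 apply Rmult_le_compat_l. apply pos_INR. eapply Rle_trans; [apply log_mgf_lipschitz; auto|].
 unfold set_coord. destruct (Nat.eqb_spec r i), (Nat.eqb_spec s i).
 - replace (c - c - (c' - c')) with 0 by ring. rewrite Rabs_R0. apply Rabs_pos.
 - replace (c - l s - (c' - l s)) with (c - c') by ring. lra.
 - replace (l r - c - (l r - c')) with (- (c - c')) by ring. rewrite Rabs_Ropp. lra.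
 - replace (l r - l s - (l r - l s)) with 0 by ring. rewrite Rabs_R0. apply Rabs_pos. Qed.

Lemma dual_0 : dual (fun _ => 0) = 0.
Proof. unfold dual. rewrite (rsum_ext _ _ (fun _ => 0)). apply rsum_zero. intros.
  rewrite Rminus_0_r, log_mgf_0; auto. ring. Qed.

Definition c_alpha := - ln (1 - al).
Definition n_edges := INR (length (offdiag d)).

Lemma c_alpha_pos : 0 < c_alpha.
Proof. unfold c_alpha. assert (ln (1 - al) < ln 1) by (apply ln_increasing; lra). rewrite ln_1 in H. lra. Qed.

Definition gap_bound eps := c_alpha * n_edges / eps - c_alpha - ln al.

(* Every term of [dual] is at least [ln (1 - al)] per unit of [mu], and the term of an edge
   with gap [t] is at least [ln al + t] per unit, so a large gap makes [dual] positive. *)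
Lemma dual_nonpos_gap_bound eps n l : 0 < eps -> 0 < n ->
  (forall e, In e (offdiag d) -> eps * n <= INR (mu (fst e) (snd e)) <= n) ->
  dual l <= 0 -> forall e, In e (offdiag d) -> l (fst e) - l (snd e) <= gap_bound eps.
Proof. intros He Hn Hmu HL e0 He0. unfold gap_bound. set (t := l (fst e0) - l (snd e0)).
 assert (Hsum : rsum (offdiag d) (fun e => INR (mu (fst e) (snd e)) *
   (log_mgf al (l (fst e) - l (snd e)) + c_alpha)) <= c_alpha * n_edges * n).
 { rewrite (rsum_ext _ _ (fun e => INR (mu (fst e) (snd e)) * log_mgf al (l (fst e) - l (snd e)) + c_alpha *
   INR (mu (fst e) (snd e)))) by (intros; ring).
   rewrite rsum_plus, rsum_scal. fold (dual l). assert (rsum (offdiag d)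
     (fun e => INR (mu (fst e) (snd e))) <= n_edges * n).
   { unfold n_edges. rewrite <- rsum_const. apply rsum_le. intros e He'. apply Hmu; auto. }
   pose proof c_alpha_pos. nra. }
 assert (Hpos : forall e, In e (offdiag d) -> 0 <=
   INR (mu (fst e) (snd e)) * (log_mgf al (l (fst e) - l (snd e)) + c_alpha)).
 { intros e _. apply Rmult_le_pos. apply pos_INR.
   pose proof (log_mgf_ge_ln_1_sub al Hal (l (fst e) - l (snd e))). unfold c_alpha. lra. }
 pose proof (rsum_ge_term _ _ e0 He0 Hpos) as H1. cbv beta in H1. fold t in H1.
 pose proof (log_mgf_ge_ln_add al Hal t) as H2. pose proof (Hmu e0 He0) as H3. pose proof c_alpha_pos as H4.
 assert (Hk : 0 <= n_edges) by apply pos_INR.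
 destruct (Rle_dec 0 (ln al + t + c_alpha)) as [Hp|Hp].
 - assert (eps * n * (ln al + t + c_alpha) <= c_alpha * n_edges * n).
   { eapply Rle_trans; [|exact Hsum]. eapply Rle_trans; [|exact H1]. apply Rmult_le_compat; try lra. nra. }
   assert (ln al + t + c_alpha <= c_alpha * n_edges / eps).
   { apply (Rmult_le_reg_l (eps * n)). nra. replace (eps * n * (c_alpha * n_edges / eps)) with (c_alpha *
     n_edges * n) by (field; lra). lra. }
   lra.
 - assert (0 <= c_alpha * n_edges / eps) by (apply Rle_mult_inv_pos; nra). lra. Qed.

Lemma dual_ext l l' : (forall r s, (r < d)%nat -> (s < d)%nat -> l r - l s = l' r - l' s) -> dual l = dual l'.
Proof. intros H. unfold dual. apply rsum_ext. intros [r s] Hrs. apply offdiag_In in Hrs. simpl.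
  rewrite H by lia. reflexivity. Qed.

(* [dual] only sees differences, so one may fix [l 0 = 0]; on [dual <= 0] the other
   coordinates then lie in a box. *)
Lemma dual_min_exists eps n : (1 <= d)%nat -> 0 < eps -> 0 < n ->
  (forall e, In e (offdiag d) -> eps * n <= INR (mu (fst e) (snd e)) <= n) ->
  exists ls, (forall l, dual ls <= dual l) /\ dual ls <= 0.
Proof. intros Hd He Hn Hmu. set (b := Rabs (gap_bound eps) + 1).
 assert (Hb : 0 <= b) by (unfold b; pose proof (Rabs_pos (gap_bound eps)); lra).
 destruct (box_argmin_lipschitz dual total_mass (- b) b (seq 1 (d -
   1)) (seq_NoDup _ _) ltac:(lra) total_mass_nonneg
   (fun l i c c' _ => dual_lipschitz l i c c') (fun _ => 0)) as [ls [H1 [H2 H3]]].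
 assert (Hadm0 : dual ls <= dual (fun _ => 0)). { apply H3; auto. intros; lra. }
 rewrite dual_0 in Hadm0.
 exists ls. split; auto. intros l.
 set (l' := fun j => if Nat.ltb j d then l j - l 0%nat else 0).
 assert (E : dual l = dual l'). { apply dual_ext. intros r s Hr Hs. unfold l'. apply Nat.ltb_lt in Hr, Hs.
   rewrite Hr, Hs. ring. }
 rewrite E. destruct (Rle_dec (dual l') 0) as [Hl|Hl]; [|lra].
 apply H3.
 - intros i Hi. rewrite in_seq in Hi. unfold l'. destruct (Nat.ltb_spec i d); auto.
   replace i with 0%nat by lia. ring.
 - intros i Hi. rewrite in_seq in Hi.
   pose proof (dual_nonpos_gap_bound eps n l' He Hn Hmu Hl (i, 0%nat) ltac:(apply offdiag_In; lia)) as B1.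
   pose proof (dual_nonpos_gap_bound eps n l' He Hn Hmu Hl (0%nat, i) ltac:(apply offdiag_In; lia)) as B2.
   simpl in B1, B2. fold (gap_bound eps) in B1, B2. unfold l' in B1, B2 |- *.
   assert (Hi0 : (0 <? d)%nat = true) by (apply Nat.ltb_lt; lia).
     assert (Hid : (i <? d)%nat = true) by (apply Nat.ltb_lt; lia).
   rewrite Hi0, Hid in *. pose proof (Rle_abs (gap_bound eps)). pose proof (Rle_abs (- gap_bound eps)).
     rewrite Rabs_Ropp in H0. unfold b. lra. Qed.

End Dual.

Lemma rsum_log_mgf_derivative al (Hal : 0 < al < 1) (l : list (nat * nat)) (w a c : nat * nat -> R) :
  derivable_pt_lim (fun h => rsum l (fun e => w e * log_mgf al (a e + c e * h))) 0 (rsum l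
    (fun e => w e * (c e * tilted_prob al (a e)))).
Proof. induction l as [|e l IH].
 - rewrite rsum_nil. assert (E : (fun h : R => rsum [] (fun e => w e * log_mgf al (a e + c e * h))) =
   fct_cte 0) by reflexivity.
   rewrite E. apply derivable_pt_lim_const.
 - rewrite rsum_cons. assert (E : (fun h : R => rsum (e :: l) (fun e => w e * log_mgf al (a e + c e * h))) =
     plus_fct (mult_real_fct (w e) (fun h => log_mgf al (a e + c e * h))) (fun h => rsum l
       (fun e => w e * log_mgf al (a e + c e * h)))) by reflexivity.
   rewrite E. apply derivable_pt_lim_plus; auto. apply derivable_pt_lim_scal. apply log_mgf_derivative; auto.
     Qed.

Lemma derivative_at_min (f : R -> R) l : derivable_pt_lim f 0 l -> (forall h, f 0 <= f h) -> l = 0.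
Proof. intros D H. set (pr := exist (fun l => derivable_pt_abs f 0 l) l D : derivable_pt f 0).
 rewrite <- (derive_pt_eq_0 f 0 l pr D). apply (deriv_minimum f (-1) 1 0 pr); try lra. intros; apply H. Qed.

Lemma rsum_offdiag_row d r (g : nat -> nat -> R) : (r < d)%nat ->
  rsum (offdiag d) (fun e => (if Nat.eqb (fst e) r then 1 else 0) * g (fst e) (snd e)) =
    rsum (others d r) (fun s => g r s).
Proof. intros Hr. rewrite (rsum_offdiag_rows d (fun x y => (if Nat.eqb x r then 1 else 0) * g x y)).
 rewrite (rsum_ext _ _ (fun x => if Nat.eqb x r then rsum (others d x) (fun s => g x s) else 0)).
 apply (rsum_delta (seq 0 d) r (fun x => rsum (others d x) (fun s => g x s))). apply seq_NoDup.
   apply in_seq; lia.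
 intros x _. destruct (Nat.eqb x r). apply rsum_ext; intros; ring. rewrite (rsum_ext _ _ (fun _ => 0)).
   apply rsum_zero. intros; ring. Qed.

Lemma rsum_offdiag_col d r (g : nat -> nat -> R) : (r < d)%nat ->
  rsum (offdiag d) (fun e => (if Nat.eqb (snd e) r then 1 else 0) * g (fst e) (snd e)) =
    rsum (others d r) (fun s => g s r).
Proof. intros Hr. rewrite (rsum_offdiag_cols d (fun x y => (if Nat.eqb y r then 1 else 0) * g x y)).
 rewrite (rsum_ext _ _ (fun y => if Nat.eqb y r then rsum (others d y) (fun s => g s y) else 0)).
 apply (rsum_delta (seq 0 d) r (fun y => rsum (others d y) (fun s => g s y))). apply seq_NoDup.
   apply in_seq; lia.
 intros y _. destruct (Nat.eqb y r). apply rsum_ext; intros; ring. rewrite (rsum_ext _ _ (fun _ => 0)).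
   apply rsum_zero. intros; ring. Qed.

(* The derivative of [h |-> dual (ls + h e_r)] at [0] is the net tilted flow out of [r]. *)
Theorem dual_min_balanced d al mu ls : 0 < al < 1 -> (forall l, dual d al mu ls <= dual d al mu l) ->
  forall r, (r < d)%nat ->
  rsum (others d r) (fun s => INR (mu r s) * tilted_prob al (ls r - ls s)) =
    rsum (others d r) (fun s => INR (mu s r) * tilted_prob al (ls s - ls r)).
Proof. intros Hal Hmin r Hr.
 set (c := fun e : nat * nat => (if Nat.eqb (fst e) r then 1 else 0) - (if Nat.eqb (snd e) r then 1 else 0)).
 set (a := fun e : nat * nat => ls (fst e) - ls (snd e)).
 set (w := fun e : nat * nat => INR (mu (fst e) (snd e))).
 assert (Eg : forall h, dual d al mu (set_coord ls r (ls r + h)) =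
   rsum (offdiag d) (fun e => w e * log_mgf al (a e + c e * h))).
 { intros h. unfold dual. apply rsum_ext. intros e _. unfold w, a, c, set_coord. f_equal. f_equal.
   destruct (Nat.eqb (fst e) r) eqn:E1, (Nat.eqb (snd e) r) eqn:E2;
     apply Nat.eqb_eq in E1 || apply Nat.eqb_neq in E1;
   apply Nat.eqb_eq in E2 || apply Nat.eqb_neq in E2; subst; try rewrite E1; try rewrite E2; ring. }
 pose proof (rsum_log_mgf_derivative al Hal (offdiag d) w a c) as D.
 assert (Hm : forall h, (fun h => rsum (offdiag d) (fun e => w e * log_mgf al (a e + c e * h))) 0 <=
   (fun h => rsum (offdiag d) (fun e => w e * log_mgf al (a e + c e * h))) h).
 { intros h. cbv beta. rewrite <- !Eg. rewrite Rplus_0_r, set_coord_id. apply Hmin. }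
 pose proof (derivative_at_min _ _ D Hm) as Z.
 rewrite (rsum_ext _ _ (fun e => (if Nat.eqb (fst e) r then 1 else 0) * (w e *
   tilted_prob al (a e)) - (if Nat.eqb (snd e) r then 1 else 0) * (w e * tilted_prob al (a e)))) in Z
   by (intros; unfold c; ring).
 rewrite rsum_minus in Z. unfold w, a in Z.
 rewrite (rsum_offdiag_row d r (fun x y => INR (mu x y) * tilted_prob al (ls x - ls y))) in Z by auto.
 rewrite (rsum_offdiag_col d r (fun x y => INR (mu x y) * tilted_prob al (ls x - ls y))) in Z by auto. lra.
   Qed.

(** * Duality and tilting at the minimizer *)

Lemma rprod_exp {I} (l : list I) f : rprod l (fun i => exp (f i)) = exp (rsum l f).
Proof. induction l. unfold rprod, rsum; simpl. rewrite exp_0; auto.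
  rewrite rprod_cons, rsum_cons, IHl, exp_plus. auto. Qed.

Lemma boxes_le_mu ps mu nu : In nu (boxes ps mu) -> forall e, In e ps ->
  (nu (fst e) (snd e) <= mu (fst e) (snd e))%nat.
Proof. revert nu. induction ps as [|[r s] ps IH]; intros nu Hnu e He; [destruct He|].
 cbn [boxes] in Hnu. apply in_flat_map in Hnu. destruct Hnu as [nu' [Hnu' Hin]]. apply in_map_iff in Hin.
   destruct Hin as [k [<- Hk]].
 rewrite in_seq in Hk. destruct e as [a b]. destruct (Nat.eq_dec a r), (Nat.eq_dec b s); subst.
 - simpl. rewrite upd_same. lia.
 - simpl. rewrite upd_other by congruence. destruct He as [E|He]; [congruence|].
   apply (IH nu' Hnu' (r, b) He).
 - simpl. rewrite upd_other by congruence. destruct He as [E|He]; [congruence|].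
   apply (IH nu' Hnu' (a, s) He).
 - simpl. rewrite upd_other by congruence. destruct He as [E|He]; [congruence|].
   apply (IH nu' Hnu' (a, b) He). Qed.

Section Tilting.
Variable d : nat.
Variable al : R.
Hypothesis Hal : 0 < al < 1.
Variable mu : nat -> nat -> nat.
Variable ls : nat -> R.
Hypothesis Hmin : forall l, dual d al mu ls <= dual d al mu l.

Definition tilted r s := tilted_prob al (ls r - ls s).

Lemma tilted_balanced : forall r, (r < d)%nat ->
  rsum (others d r) (fun s => INR (mu r s) * tilted r s) =
  rsum (others d r) (fun s => INR (mu s r) * tilted s r).
Proof. intros r Hr. unfold tilted. apply dual_min_balanced; auto. Qed.

Lemma tilted_feasible : theta_feasible d mu tilted.
Proof. split.
 - intros r s _ _. pose proof (tilted_prob_bounds al Hal (ls r - ls s)). unfold tilted. lra.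
 - apply inF_others. intros r Hr. rewrite (rsum_ext _ _ (fun s => INR (mu r s) * tilted r s)) by (intros;
   ring).
   rewrite (rsum_ext _ (fun s => tilted s r * INR (mu s r)) (fun s => INR (mu s r) * tilted s r)) by (intros;
     ring). apply tilted_balanced; auto. Qed.

Lemma theta_obj_tilted : theta_obj d al mu tilted = - dual d al mu ls.
Proof. unfold theta_obj, dual. unfold tilted at 1.
 rewrite (rsum_ext _ _ (fun e => INR (mu (fst e) (snd e)) * tilted_prob al (ls (fst e) - ls (snd e)) *
   (ls (fst e) - ls (snd e)) - INR (mu (fst e) (snd e)) * log_mgf al (ls (fst e) - ls (snd e)))).
 2:{ intros e _. rewrite KL_tilted by auto. ring. }
 rewrite rsum_minus. pose proof (rsum_circulation_gradient d
   (fun r s => INR (mu r s) * tilted r s) ls tilted_balanced) as Z. unfold tilted in Z. cbv beta in Z.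
 rewrite Z. ring. Qed.

Lemma theta_obj_ge_dual x : theta_feasible d mu x -> - dual d al mu ls <= theta_obj d al mu x.
Proof. intros [Hx HF0]. pose proof (proj1 (inF_others d (fun r s => x r s * INR (mu r s))) HF0) as HF.
  cbv beta in HF. unfold theta_obj, dual.
 assert (Z : rsum (offdiag d) (fun e => x (fst e) (snd e) * INR (mu (fst e) (snd e)) *
   (ls (fst e) - ls (snd e))) = 0)
   by (apply (rsum_circulation_gradient d (fun r s => x r s * INR (mu r s)) ls); auto).
 apply (Rle_trans _ (rsum (offdiag d) (fun e => x (fst e) (snd e) * INR (mu (fst e) (snd e)) *
   (ls (fst e) - ls (snd e))) -
    rsum (offdiag d) (fun e => INR (mu (fst e) (snd e)) * log_mgf al (ls (fst e) - ls (snd e))))).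
      rewrite Z; lra.
 rewrite <- rsum_minus. apply rsum_le. intros [r s] Hrs. apply offdiag_In in Hrs. simpl.
 pose proof (KL_ge_legendre al Hal (x r s) (ls r - ls s) (Hx r s ltac:(lia) ltac:(lia))).
   pose proof (pos_INR (mu r s)).
 replace (x r s * INR (mu r s) * (ls r - ls s) - INR (mu r s) *
   log_mgf al (ls r - ls s)) with (INR (mu r s) * (x r s * (ls r - ls s) - log_mgf al (ls r - ls s))) by ring.
 apply Rmult_le_compat_l; auto. Qed.

Theorem vartheta_dual : vartheta d al mu = - dual d al mu ls.
Proof. unfold vartheta. assert (Hex : exists t, is_theta_min d al mu t).
 { exists (theta_obj d al mu tilted). exists tilted. split; [apply tilted_feasible|]. split; auto.
   intros y Hy. rewrite theta_obj_tilted. apply theta_obj_ge_dual; auto. }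
 pose proof (epsilon_spec (inhabits 0) _ Hex) as [x [Hx [Ht Hm]]]. rewrite Ht.
 pose proof (theta_obj_ge_dual x Hx). pose proof (Hm tilted tilted_feasible). rewrite theta_obj_tilted in H0.
   lra. Qed.

(* On a balanced [nu] the tilting factors [exp (- nu_rs (ls r - ls s))] multiply to [1]. *)
Theorem Amu_tilted : Amu d al mu = exp (dual d al mu ls) * balance_prob d mu tilted.
Proof. unfold Amu, balance_prob, edge_pmf. rewrite <- rsum_scal. apply rsum_ext. intros nu Hnu.
 pose proof (boxes_le_mu _ _ _ Hnu) as Hle.
 rewrite (rprod_ext _ _ (fun e => binom_pmf (mu (fst e) (snd e)) (tilted (fst e) (snd e)) (nu (fst e)
   (snd e)) *
   exp (INR (mu (fst e) (snd e)) * log_mgf al (ls (fst e) - ls (snd e))) * exp (- (INR (nu (fst e) (snd e)) *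
     (ls (fst e) - ls (snd e)))))).
 2:{ intros e He. cbv zeta. unfold tilted. apply binom_tilt; auto. }
 rewrite !rprod_mult, !rprod_exp. fold (dual d al mu ls).
 destruct (classic (balanced d nu)) as [Hb|Hb].
 - rewrite (rsum_ext _ (fun e => - (INR (nu (fst e) (snd e)) * (ls (fst e) - ls (snd e))))
   (fun e => - 1 * (INR (nu (fst e) (snd e)) * (ls (fst e) - ls (snd e))))) by (intros; ring).
   rewrite rsum_scal. rewrite (rsum_circulation_gradient d (fun r s => INR (nu r s)) ls) by exact Hb.
     rewrite Rmult_0_r, exp_0. ring.
 - rewrite indic_false by auto. ring. Qed.

End Tilting.

(** * Spanning tree polynomial *)

Lemma In_powerset_incl {A} (l : list A) E : In E (powerset l) -> incl E l.
Proof. revert E. induction l as [|a l IH]; intros E HE; simpl in HE.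
 - destruct HE as [<-|[]]. intros x [].
 - apply in_app_or in HE. destruct HE as [HE|HE].
   + intros x Hx. right. apply (IH E HE x Hx).
   + apply in_map_iff in HE. destruct HE as [E' [<- HE']]. intros x [<-|Hx]. left; auto. right.
     apply (IH E' HE' x Hx). Qed.

Lemma filter_in_powerset {A} (p : A -> bool) l : In (filter p l) (powerset l).
Proof. induction l as [|a l IH]; simpl. left; auto. apply in_or_app. destruct (p a).
 - right. apply in_map. auto.
 - left. auto. Qed.

Lemma star_spanning_tree d : (1 <= d)%nat -> is_spanning_tree d (star_edges d).
Proof. intros Hd. split. apply length_star_edges; auto. intros v Hv. destruct v as [|v]. apply rt_refl.
 apply rt_step. right. apply star_edges_In. simpl. lia. Qed.

Lemma NKd_ge1 d : (1 <= d)%nat -> 1 <= NKd d.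
Proof. intros Hd. unfold NKd. rewrite <- (indic_true (is_spanning_tree d (star_edges d))) by
  (apply star_spanning_tree; auto).
 apply (rsum_ge_term _ (fun E => indic (is_spanning_tree d E))). apply filter_in_powerset.
   intros; apply indic_01. Qed.

Theorem TKd_bounds d (z : nat -> nat -> R) lo hi : (1 <= d)%nat -> 0 <= lo ->
  (forall e, In e (offdiag d) -> lo <= z (fst e) (snd e) <= hi) ->
  lo ^ (d - 1) <= TKd d z <= hi ^ (d - 1).
Proof. intros Hd Hlo Hz. pose proof (NKd_ge1 d Hd) as HN. unfold TKd.
 assert (Hpt : forall E, In E (powerset (offdiag d)) ->
   indic (is_spanning_tree d E) * lo ^ (d - 1) <=
   indic (is_spanning_tree d E) * rprod E (fun e => z (fst e) (snd e)) <=
   indic (is_spanning_tree d E) * hi ^ (d - 1)).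
 { intros E HE. destruct (classic (is_spanning_tree d E)) as [Ht|Ht].
   - rewrite indic_true by auto. rewrite !Rmult_1_l. destruct Ht as [Hl _]. rewrite <- Hl, <- !rprod_const.
     apply In_powerset_incl in HE. split; apply rprod_le; intros e He; specialize (Hz e (HE e He)); lra.
   - rewrite indic_false by auto. lra. }
 assert (S1 : lo ^ (d - 1) * NKd d <= rsum (powerset (offdiag d))
   (fun E => indic (is_spanning_tree d E) * rprod E (fun e => z (fst e) (snd e)))).
 { unfold NKd. rewrite <- rsum_scal. apply rsum_le. intros E HE. specialize (Hpt E HE). lra. }
 assert (S2 : rsum (powerset (offdiag d)) (fun E => indic (is_spanning_tree d E) * rprod E
   (fun e => z (fst e) (snd e))) <= hi ^ (d - 1) * NKd d).
 { unfold NKd. rewrite <- rsum_scal. apply rsum_le. intros E HE. specialize (Hpt E HE). lra. }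
 assert (0 < / NKd d) by (apply Rinv_0_lt_compat; lra).
 split.
 - apply (Rmult_le_reg_l (NKd d)); [lra|]. rewrite <- Rmult_assoc, Rinv_r by lra. lra.
 - apply (Rmult_le_reg_l (NKd d)); [lra|]. rewrite <- Rmult_assoc, Rinv_r by lra. lra. Qed.

(** * Estimates for large n *)

Lemma sqrt_pow x k : 0 <= x -> sqrt (x ^ k) = sqrt x ^ k.
Proof. intros Hx. induction k. simpl. apply sqrt_1. simpl. rewrite sqrt_mult, IHk; auto. apply pow_le; auto.
  Qed.

Lemma sandwich_div_sqrt (E P Q sT c lo hi : R) : 0 < E -> 0 < c -> 0 < Q -> 0 <= P ->
  c * Q <= sT <= Q -> lo <= P * Q <= hi ->
  lo * c * E / sT <= E * P /\ E * P <= hi * E / sT.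
Proof. intros HE Hc HQ HP [HT1 HT2] [Hlo Hhi]. assert (HT : 0 < sT) by nra.
 replace (E * P) with (E * P * sT / sT) by (field; lra).
 split; unfold Rdiv; apply Rmult_le_compat_r; try (left; apply Rinv_0_lt_compat; lra).
 - assert (P * (c * Q) <= P * sT) by (apply Rmult_le_compat_l; lra).
   assert (c * lo <= c * (P * Q)) by (apply Rmult_le_compat_l; lra).
   replace (lo * c * E) with (E * (c * lo)) by ring. rewrite Rmult_assoc. apply Rmult_le_compat_l; lra.
 - assert (P * sT <= P * Q) by (apply Rmult_le_compat_l; lra).
   replace (hi * E) with (E * hi) by ring. rewrite Rmult_assoc. apply Rmult_le_compat_l; lra. Qed.

Section Estimates.
Variable d : nat.
Variables al eps : R.
Hypothesis Hd : (2 <= d)%nat.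
Hypothesis Hal : 0 < al < 1.
Hypothesis Heps : 0 < eps < 1.

Definition gap_max := Rabs (gap_bound d al eps).
Definition margin := Rmin (1/2) (Rmin (tilted_prob al (- gap_max)) (1 - tilted_prob al gap_max)).

Lemma margin_pos : 0 < margin <= 1/2.
Proof. unfold margin. split; [|apply Rmin_l].
 pose proof (tilted_prob_bounds al Hal (- gap_max)). pose proof (tilted_prob_bounds al Hal gap_max).
 repeat apply Rmin_glb_lt; lra. Qed.

Lemma margin_tilted_prob t : Rabs t <= gap_max -> margin <= tilted_prob al t <= 1 - margin.
Proof. intros Ht. assert (- gap_max <= t <= gap_max) by (unfold Rabs in Ht; destruct (Rcase_abs t); lra).
 pose proof (tilted_prob_le al Hal (- gap_max) t ltac:(lra)).
   pose proof (tilted_prob_le al Hal t gap_max ltac:(lra)).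
 unfold margin. pose proof (Rmin_r (1/2) (Rmin (tilted_prob al (- gap_max)) (1 - tilted_prob al gap_max))).
 pose proof (Rmin_l (tilted_prob al (- gap_max)) (1 - tilted_prob al gap_max)).
 pose proof (Rmin_r (tilted_prob al (- gap_max)) (1 - tilted_prob al gap_max)). lra. Qed.

(* A deviation [2 d sqrt n] on a star edge is at most [window * sqrt mu_rs]. *)
Definition window := 2 * INR d / sqrt eps.
Definition pmf_lo := exp (-16 * window * (window + 1) / margin) / 4.
Definition pmf_hi := exp (96 / margin) / sqrt eps.
Definition const_lo := pmf_lo ^ (d - 1) * (3 / 4) ^ length (nonstar_edges d) * sqrt eps ^ (d - 1).
Definition const_hi := Rmax const_lo (pmf_hi ^ (d - 1)).
Definition sqrt_n0 := Rmax (Rmax (24 / margin / sqrt eps) (8 * (window + 1) / margin / sqrt eps))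
                           (Rmax (2 * INR d / (margin * eps)) 1).

Lemma sqrt_eps_pos : 0 < sqrt eps. Proof. apply sqrt_lt_R0; lra. Qed.
Lemma sqrt_eps_le1 : sqrt eps <= 1. Proof. rewrite <- sqrt_1. apply sqrt_le_1_alt. lra. Qed.

Lemma window_ge1 : 1 <= window.
Proof. unfold window. pose proof sqrt_eps_pos. pose proof sqrt_eps_le1.
  assert (2 <= INR d) by (apply (le_INR 2); auto).
 apply (Rmult_le_reg_r (sqrt eps)); auto. unfold Rdiv. rewrite Rmult_assoc, Rinv_l by lra. lra. Qed.

Lemma const_lo_pos : 0 < const_lo.
Proof. unfold const_lo, pmf_lo. pose proof sqrt_eps_pos.
 repeat apply Rmult_lt_0_compat; apply pow_lt; try lra. apply Rdiv_lt_0_compat; [apply exp_pos|lra]. Qed.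

Variable n : nat.
Variable mu : nat -> nat -> nat.
Hypothesis Hmu : forall e, In e (offdiag d) -> eps * INR n <= INR (mu (fst e) (snd e)) <= INR n.
Hypothesis Hn : sqrt_n0 <= sqrt (INR n).

Lemma sqrt_n_large : 1 <= sqrt (INR n) /\ 24 / margin / sqrt eps <= sqrt (INR n) /\
  8 * (window + 1) / margin / sqrt eps <= sqrt (INR n) /\ 2 * INR d / (margin * eps) <= sqrt (INR n).
Proof. unfold sqrt_n0 in Hn.
 pose proof (Rmax_l (24 / margin / sqrt eps) (8 * (window + 1) / margin / sqrt eps)).
 pose proof (Rmax_r (24 / margin / sqrt eps) (8 * (window + 1) / margin / sqrt eps)).
 pose proof (Rmax_l (2 * INR d / (margin * eps)) 1). pose proof (Rmax_r (2 * INR d / (margin * eps)) 1).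
 pose proof (Rmax_l (Rmax (24 / margin / sqrt eps) (8 * (window + 1) / margin / sqrt eps)) (Rmax (2 *
   INR d / (margin * eps)) 1)).
 pose proof (Rmax_r (Rmax (24 / margin / sqrt eps) (8 * (window + 1) / margin / sqrt eps)) (Rmax (2 *
   INR d / (margin * eps)) 1)).
 lra. Qed.

Lemma sqrt_mu_bounds e : In e (offdiag d) ->
  sqrt eps * sqrt (INR n) <= sqrt (INR (mu (fst e) (snd e))) <= sqrt (INR n).
Proof. intros He. specialize (Hmu e He). rewrite <- sqrt_mult by (lra || apply pos_INR).
 split; apply sqrt_le_1_alt; lra. Qed.

Lemma dual_nonpos_gap_le l : dual d al mu l <= 0 ->
  forall r s, In (r, s) (offdiag d) -> Rabs (l r - l s) <= gap_max.
Proof. intros HL r s He. assert (Hn0 : 0 < INR n) by (destruct sqrt_n_large as [H1 _];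
   destruct (Rle_lt_dec (INR n) 0) as [H0|]; [rewrite (sqrt_neg_0 _ H0) in H1; lra|lra]).
 pose proof (dual_nonpos_gap_bound d al Hal mu eps (INR n) l ltac:(lra) Hn0 Hmu HL (r, s) He) as B1.
 assert (He' : In (s, r) (offdiag d)) by (apply offdiag_In in He; apply offdiag_In; lia).
 pose proof (dual_nonpos_gap_bound d al Hal mu eps (INR n) l ltac:(lra) Hn0 Hmu HL (s, r) He') as B2.
 simpl in B1, B2. unfold gap_max. pose proof (Rle_abs (gap_bound d al eps)).
 unfold Rabs at 1. destruct (Rcase_abs (l r - l s)); lra. Qed.

Lemma balance_prob_upper_large y : (forall e, In e (offdiag d) ->
  margin <= y (fst e) (snd e) <= 1 - margin) ->
  balance_prob d mu y <= (pmf_hi / sqrt (INR n)) ^ (d - 1).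
Proof. intros Hy. pose proof margin_pos. pose proof sqrt_eps_pos. destruct sqrt_n_large as (Hs1 & Hs2 & _).
 apply balance_prob_upper; [lia| |intros e He; specialize (Hy e He); lra|].
 - unfold pmf_hi. repeat apply Rle_mult_inv_pos; try lra. apply Rlt_le, exp_pos.
 - intros e k He Hk. pose proof (sqrt_mu_bounds e He) as Hsq.
   assert (H24 : 24 / margin <= sqrt (INR (mu (fst e) (snd e)))).
   { replace (24 / margin) with (sqrt eps * (24 / margin / sqrt eps)) by (field; lra).
     eapply Rle_trans; [|apply Hsq]. apply Rmult_le_compat_l; lra. }
   eapply Rle_trans; [apply (binom_pmf_upper _ _ margin); auto|].
   unfold pmf_hi, Rdiv. rewrite Rmult_assoc. apply Rmult_le_compat_l; [apply Rlt_le, exp_pos|].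
   rewrite <- Rinv_mult. apply Rinv_le_contravar; nra. Qed.

Lemma balance_prob_lower_large y : (forall e, In e (offdiag d) ->
  margin <= y (fst e) (snd e) <= 1 - margin) ->
  (forall r, (r < d)%nat -> rsum (others d r) (fun s => INR (mu r s) * y r s) =
    rsum (others d r) (fun s => INR (mu s r) * y s r)) ->
  (pmf_lo / sqrt (INR n)) ^ (d - 1) * (3 / 4) ^ length (nonstar_edges d) <= balance_prob d mu y.
Proof. intros Hy Hbal. set (s := sqrt (INR n)). pose proof margin_pos as Hdl. pose proof sqrt_eps_pos.
  pose proof sqrt_eps_le1.
 destruct sqrt_n_large as (Hs1 & _ & Hs3 & Hs4). fold s in Hs1, Hs3, Hs4.
 assert (Hss : s * s = INR n) by (apply sqrt_sqrt, pos_INR).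
 pose proof window_ge1 as HA.
 assert (HdlE : 2 * INR d * s <= margin * eps * INR n).
 { rewrite <- Hss. assert (0 < margin * eps) by nra.
   assert (2 * INR d <= margin * eps * s). { apply (Rmult_le_reg_r (/ (margin * eps))).
     apply Rinv_0_lt_compat; auto.
     replace (margin * eps * s * / (margin * eps)) with s by (field; lra). exact Hs4. }
   nra. }
 pose proof (star_edges_offdiag d) as Hstar.
 apply (balance_prob_lower d mu y s); auto; try lia; try lra.
 - unfold pmf_lo. apply Rle_mult_inv_pos; [|lra]. apply Rle_mult_inv_pos; [apply Rlt_le, exp_pos|lra].
 - intros e He. specialize (Hy e He). lra.
 - intros e He. specialize (Hy e He). specialize (Hmu e He).
   assert (y (fst e) (snd e) * (1 - y (fst e) (snd e)) <=
     1 / 4) by (pose proof (pow2_ge_0 (y (fst e) (snd e) - 1/2)); simpl in *; nra).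
   simpl. rewrite Rmult_1_r, Hss. pose proof (pos_INR (mu (fst e) (snd e))). nra.
 - intros e x He Hx. specialize (Hy e (Hstar e He)). specialize (Hmu e (Hstar e He)).
   assert (margin * eps * INR n <= INR (mu (fst e) (snd e)) * y (fst e) (snd e)).
   { replace (margin * eps * INR n) with (eps * INR n * margin) by ring.
     apply Rmult_le_compat; nra. }
   unfold Rabs in Hx. destruct (Rcase_abs (x - INR (mu (fst e) (snd e)) * y (fst e) (snd e))); lra.
 - intros e k He Hk. pose proof (Hy e (Hstar e He)) as Hye. pose proof (Hmu e (Hstar e He)) as Hme.
   pose proof (sqrt_mu_bounds e (Hstar e He)) as Hqe. fold s in Hqe.
   assert (Hkk : (k <= mu (fst e) (snd e))%nat).
   { apply INR_le. assert (margin * eps * INR n <= margin * INR (mu (fst e) (snd e))) by nra.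
     unfold Rabs in Hk. destruct (Rcase_abs (INR k - INR (mu (fst e) (snd e)) * y (fst e) (snd e))); nra. }
   split; auto.
   assert (HAs : 2 * INR d * s <= window * sqrt (INR (mu (fst e) (snd e)))).
   { replace (2 * INR d * s) with (window * (sqrt eps * s)) by (unfold window; field; lra).
     apply Rmult_le_compat_l; lra. }
   assert (H8 : 8 * (window + 1) / margin <= sqrt (INR (mu (fst e) (snd e)))).
   { replace (8 * (window + 1) / margin) with (sqrt eps * (8 * (window + 1) / margin / sqrt eps)) by (field;
     lra).
     eapply Rle_trans; [|apply Hqe]. apply Rmult_le_compat_l; lra. }
   eapply Rle_trans; [|apply (binom_pmf_lower _ _ margin window); auto; lra].
   unfold pmf_lo, Rdiv. apply Rmult_le_compat_l; [apply Rmult_le_pos; [apply Rlt_le, exp_pos|lra]|].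
   apply Rinv_le_contravar; nra. Qed.

Theorem Amu_bounds :
  const_lo * exp (- vartheta d al mu) / sqrt (TKd d (fun r s => INR (mu r s))) <= Amu d al mu /\
  Amu d al mu <= const_hi * exp (- vartheta d al mu) / sqrt (TKd d (fun r s => INR (mu r s))).
Proof. set (s := sqrt (INR n)). pose proof sqrt_eps_pos. destruct sqrt_n_large as [Hs1 _]. fold s in Hs1.
 assert (Hss : s * s = INR n) by (apply sqrt_sqrt, pos_INR).
 destruct (dual_min_exists d al Hal mu eps (INR n) ltac:(lia) ltac:(lra) ltac:(nra) Hmu) as [ls [Hmin HL0]].
 assert (Hy : forall e, In e (offdiag d) -> margin <= tilted al ls (fst e) (snd e) <= 1 - margin)
   by (intros [r s0] He; apply margin_tilted_prob, dual_nonpos_gap_le; auto).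
 pose proof (balance_prob_upper_large _ Hy) as HPu.
 pose proof (balance_prob_lower_large _ Hy (tilted_balanced d al Hal mu ls Hmin)) as HPl.
 assert (HT : (eps * INR n) ^ (d - 1) <= TKd d (fun r s0 => INR (mu r s0)) <= INR n ^ (d - 1))
   by (apply TKd_bounds; [lia|nra|exact Hmu]).
 rewrite (Amu_tilted d al Hal mu ls), (vartheta_dual d al Hal mu ls Hmin), Ropp_involutive.
 unfold const_lo. apply (sandwich_div_sqrt _ _ (s ^ (d - 1))).
 - apply exp_pos.
 - apply pow_lt; lra.
 - apply pow_lt; lra.
 - unfold balance_prob. apply rsum_nonneg; intros. apply Rmult_le_pos; [apply indic_01|].
   apply rprod_nonneg; intros e He. apply binom_pmf_nonneg. specialize (Hy e He). pose proof margin_pos. lra.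
 - rewrite <- Rpow_mult_distr. unfold s. rewrite <- sqrt_mult, <- !sqrt_pow by (lra || apply pos_INR || nra).
   split; apply sqrt_le_1_alt; lra.
 - assert (HQ : 0 < s ^ (d - 1)) by (apply pow_lt; lra).
   fold s in HPu, HPl. unfold Rdiv in HPu, HPl. rewrite Rpow_mult_distr, pow_inv in HPu, HPl. split.
   + replace (pmf_lo ^ (d - 1) * (3 / 4) ^ length (nonstar_edges d))
       with (pmf_lo ^ (d - 1) * / s ^ (d - 1) * (3 / 4) ^ length (nonstar_edges d) * s ^ (d - 1)) by (field;
         lra).
     apply Rmult_le_compat_r; lra.
   + eapply Rle_trans; [|apply Rmax_r].
     replace (pmf_hi ^ (d - 1)) with (pmf_hi ^ (d - 1) * / s ^ (d - 1) * s ^ (d - 1)) by (field; lra).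
     apply Rmult_le_compat_r; lra. Qed.

End Estimates.

Theorem mainTheorem10 (d : nat) (alpha eps : R) :
  (2 <= d)%nat -> 0 < alpha < 1 -> 0 < eps < 1 ->
  exists C1 C2 : R, 0 < C1 /\ C1 <= C2 /\
  exists N0 : nat, forall n : nat, (N0 <= n)%nat ->
  forall mu : nat -> nat -> nat,
    (forall r s, (r < d)%nat -> (s < d)%nat -> (mu r s <= n)%nat) ->
    (forall r s, (r < d)%nat -> (s < d)%nat -> r <> s -> INR (mu r s) >= eps * INR n) ->
    C1 * exp (- vartheta d alpha mu) / sqrt (TKd d (fun r s => INR (mu r s)))
      <= Amu d alpha mu /\
    Amu d alpha mu
      <= C2 * exp (- vartheta d alpha mu) / sqrt (TKd d (fun r s => INR (mu r s))).
Proof. intros Hd Hal Heps. exists (const_lo d alpha eps), (const_hi d alpha eps).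
 split; [apply const_lo_pos; auto|]. split; [apply Rmax_l|].
 destruct (INR_unbounded (sqrt_n0 d alpha eps ^ 2)) as [N0 HN0]. exists N0. intros n Hn mu Hle Hge.
 apply (Amu_bounds d alpha eps Hd Hal Heps n mu).
 - intros [r s] He. apply offdiag_In in He. simpl. split; [apply Rge_le, Hge|apply le_INR, Hle]; lia.
 - assert (1 <= sqrt_n0 d alpha eps) by (unfold sqrt_n0; eapply Rle_trans; [|apply Rmax_r]; apply Rmax_r).
   rewrite <- (sqrt_pow2 (sqrt_n0 d alpha eps)) by lra. apply sqrt_le_1_alt. apply le_INR in Hn. lra. Qed.
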